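(* Let $a>0$. For every $\psi\in\mathcal D[0,\infty)$, set $\bar\phi\doteq\Lambda_a(\Gamma_0(\psi))$ and $\bar\eta\doteq\bar\phi-\psi$. Then $(\bar\phi,\bar\eta)$ solves the Skorokhod problem on $[0,a]$ for $\psi$. Consequently $\Gamma_{0,a}=\Lambda_a\circ\Gamma_0$ on $\mathcal D[0,\infty)$.
   Context: $\mathcal D[0,\infty)$ is the space of right-continuous functions $[0,\infty)\to\mathbb R$ with left limits; $\mathcal I[0,\infty)$ and $\mathcal{BV}[0,\infty)$ are its subsets of nondecreasing functions and of functions of bounded variation on every compact interval. Notation: $x^+=\max(x,0)$, $x\wedge y=\min(x,y)$. The map $\Gamma_0:\mathcal D[0,\infty)\to\mathcal D[0,\infty)$ is $\Gamma_0(\psi)(t)=\psi(t)+\sup_{s\in[0,t]}[-\psi(s)]^+$. For $a>0$, $\Lambda_a:\mathcal D[0,\infty)\to\mathcal D[0,\infty)$ is $\Lambda_a(\phi)(t)=\phi(t)-\sup_{s\in[0,t]}\big[(\phi(s)-a)^+\wedge\inf_{u\in[s,t]}\phi(u)\big]$. Skorokhod problem on $[0,a]$ for $\psi\in\mathcal D[0,\infty)$: a pair $(\bar\phi,\bar\eta)\in\mathcal D[0,\infty)\times\mathcal{BV}[0,\infty)$ such that (1) $\bar\phi(t)=\psi(t)+\bar\eta(t)\in[0,a]$ for all $t\ge0$; (2) $\bar\eta=\bar\eta_\ell-\bar\eta_u$ with $\bar\eta_\ell,\bar\eta_u\in\mathcal I[0,\infty)$, $\bar\eta_\ell(0),\bar\eta_u(0)\ge0$,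 using the convention $\bar\eta(0-)=\bar\eta_\ell(0-)=\bar\eta_u(0-)=0$ (so the associated Lebesgue–Stieltjes measures on $[0,\infty)$ may have an atom at $0$), and $\int_{[0,\infty)}\mathbb I_{\{\bar\phi(s)>0\}}\,d\bar\eta_\ell(s)=0$, $\int_{[0,\infty)}\mathbb I_{\{\bar\phi(s)<a\}}\,d\bar\eta_u(s)=0$. Such a solution exists and is unique; $\Gamma_{0,a}(\psi)$ denotes its first component $\bar\phi$. *)

From Stdlib Require Import Reals Lra ClassicalEpsilon.
Open Scope R_scope.

(** Functions on [0,oo) are represented as [R -> R]; only values at t >= 0 matter. *)

Definition posp (x : R) : R := Rmax x 0.

(** Supremum of a set of reals (meaningful when E is nonempty and bounded above;
    an arbitrary value otherwise). *)
Definition Rsup (E : R -> Prop) : R :=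
  epsilon (inhabits 0) (fun m => is_lub E m).

Definition Rinf (E : R -> Prop) : R := - Rsup (fun y => E (- y)).

Definition sup_on (f : R -> R) (a b : R) : R :=
  Rsup (fun y => exists s, a <= s <= b /\ y = f s).
Definition inf_on (f : R -> R) (a b : R) : R :=
  Rinf (fun y => exists s, a <= s <= b /\ y = f s).

Definition Gamma0 (psi : R -> R) (t : R) : R :=
  psi t + sup_on (fun s => posp (- psi s)) 0 t.

Definition Lambda (a : R) (phi : R -> R) (t : R) : R :=
  phi t - sup_on (fun s => Rmin (posp (phi s - a)) (inf_on phi s t)) 0 t.

Definition right_cont (f : R -> R) (t : R) : Prop :=
  forall eps, 0 < eps -> exists d, 0 < d /\
    forall s, t <= s < t + d -> Rabs (f s - f t) < eps.
Definition has_left_lim (f : R -> R) (t : R) : Prop :=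
  exists L, forall eps, 0 < eps -> exists d, 0 < d /\
    forall s, t - d < s < t -> Rabs (f s - L) < eps.
Definition is_D (f : R -> R) : Prop :=
  forall t, 0 <= t -> right_cont f t /\ (0 < t -> has_left_lim f t).

Definition is_I (f : R -> R) : Prop :=
  is_D f /\ forall s t, 0 <= s <= t -> f s <= f t.

Fixpoint var_sum (f : R -> R) (x : nat -> R) (n : nat) : R :=
  match n with
  | O => 0
  | S k => var_sum f x k + Rabs (f (x (S k)) - f (x k))
  end.

Definition is_BV (f : R -> R) : Prop :=
  is_D f /\
  forall T, 0 <= T -> exists M, forall (n : nat) (x : nat -> R),
    0 <= x O -> (forall i, (i < n)%nat -> x i <= x (S i)) -> x n <= T ->
    var_sum f x n <= M.

Fixpoint cover_sum (F : R -> R) (a b : nat -> R) (N : nat) : R :=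
  match N with
  | O => 0
  | S k => cover_sum F a b k + (F (b k) - F (a k))
  end.

(** For F in I[0,oo) with the convention F(0-) = 0, the Lebesgue-Stieltjes
    measure mu_F on [0,oo) has mu_F({0}) = F(0) and mu_F((s,t]) = F(t)-F(s)
    for 0 <= s <= t.  [LS_null F A] says mu_F(A) = 0, i.e.
    int_{[0,oo)} I_A dF = 0, spelled out through the outer measure:
    the atom at 0 does not charge A, and A /\ (0,oo) can be covered by
    countably many intervals (a_n,b_n] of arbitrarily small total mass. *)
Definition LS_null (F : R -> R) (A : R -> Prop) : Prop :=
  (A 0 -> F 0 = 0) /\
  forall eps, 0 < eps -> exists a b : nat -> R,
    (forall n, 0 <= a n <= b n) /\
    (forall s, 0 < s -> A s -> exists n, a n < s <= b n) /\
    (forall N, cover_sum F a b N <= eps).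

Definition Skorokhod_sol (a : R) (psi phi eta : R -> R) : Prop :=
  is_D phi /\ is_BV eta /\
  (forall t, 0 <= t -> phi t = psi t + eta t /\ 0 <= phi t <= a) /\
  exists eta_l eta_u : R -> R,
    is_I eta_l /\ is_I eta_u /\ 0 <= eta_l 0 /\ 0 <= eta_u 0 /\
    (forall t, 0 <= t -> eta t = eta_l t - eta_u t) /\
    LS_null eta_l (fun s => 0 <= s /\ phi s > 0) /\
    LS_null eta_u (fun s => 0 <= s /\ phi s < a).

From Stdlib Require Import Reals Lra Lia ClassicalEpsilon Classical Cantor.
Open Scope R_scope.

(** Write phi = Gamma_0(psi) = psi + L, where L is the running supremum of
    (-psi)^+, and phibar = Lambda_a(phi) = phi - K, where K is the upper
    regulator sup_{s<=t} min((phi s - a)^+, inf_[s,t] phi).  Then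
    etabar = phibar - psi = L - K, and the proof has two halves.

    L only grows while phi = 0, K only grows while phibar = a and
    only decreases while phibar = 0.  Hence etabar is nonincreasing on any
    stretch where phibar stays away from 0 and nondecreasing where phibar
    stays away from a; cutting [0,T] into pieces on which the cadlag function
    phibar oscillates by less than a/3, etabar is piecewise monotone.  Its
    positive variation eta_l and negative variation eta_u are then cadlag,
    nondecreasing, and their Lebesgue-Stieltjes measures do not charge
    {phibar > 0}, resp. {phibar < a}, which is checked by covering these sets
    with countably many such monotonicity pieces.

    For two solutions, D = phi1 - phi2 can only decrease on a
    stretch where it is positive (there eta_l1 and eta_u2 are flat) and has
    no upward jump at a positive point; a maximum-principle argument on the
    real line then gives D <= 0. *)

Lemma posp_ge0 x : 0 <= posp x.
Proof. apply Rmax_r. Qed.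

Lemma posp_ge x : x <= posp x.
Proof. apply Rmax_l. Qed.

Lemma posp_pos x : 0 <= x -> posp x = x.
Proof. intros. apply Rmax_left. lra. Qed.

Lemma posp_neg x : x <= 0 -> posp x = 0.
Proof. intros. apply Rmax_right. lra. Qed.

Lemma posp_le x y : x <= y -> posp x <= posp y.
Proof. intros. unfold posp, Rmax. destruct (Rle_dec x 0), (Rle_dec y 0); lra. Qed.

Lemma posp_lub x M : x <= M -> 0 <= M -> posp x <= M.
Proof. intros. apply Rmax_lub; lra. Qed.

Lemma posp_lip x y : Rabs (posp x - posp y) <= Rabs (x - y).
Proof.
  unfold posp, Rmax. destruct (Rle_dec x 0), (Rle_dec y 0);
  unfold Rabs; repeat destruct (Rcase_abs _); lra.
Qed.

Lemma Rsup_lub (E : R -> Prop) :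
  (exists x, E x) -> (exists M, forall x, E x -> x <= M) -> is_lub E (Rsup E).
Proof.
  intros [x Hx] [M HM]. unfold Rsup. apply epsilon_spec.
  destruct (completeness E) as [m Hm].
  - exists M. intros y Hy. now apply HM.
  - now exists x.
  - now exists m.
Qed.

Section SupOn.
Variables (f : R -> R) (lo hi : R).

Lemma sup_on_lub M : lo <= hi -> (forall s, lo <= s <= hi -> f s <= M) ->
  is_lub (fun y => exists s, lo <= s <= hi /\ y = f s) (sup_on f lo hi).
Proof.
  intros Hlh HM. apply Rsup_lub.
  - exists (f lo), lo. split; [lra | reflexivity].
  - exists M. intros y [s [Hs ->]]. now apply HM.
Qed.

Lemma sup_on_ge M s : (forall s, lo <= s <= hi -> f s <= M) -> lo <= s <= hi ->
  f s <= sup_on f lo hi.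
Proof.
  intros HM Hs. destruct (sup_on_lub M) as [Hub _]; [lra | exact HM |].
  apply Hub. now exists s.
Qed.

Lemma sup_on_le M : lo <= hi -> (forall s, lo <= s <= hi -> f s <= M) -> sup_on f lo hi <= M.
Proof.
  intros Hlh HM. destruct (sup_on_lub M) as [_ Hleast]; [lra | exact HM |].
  apply Hleast. intros y [s [Hs ->]]. now apply HM.
Qed.

Lemma sup_on_approx M eps : lo <= hi -> (forall s, lo <= s <= hi -> f s <= M) -> 0 < eps ->
  exists s, lo <= s <= hi /\ sup_on f lo hi - eps < f s.
Proof.
  intros Hlh HM He. apply NNPP. intros Hnone.
  assert (sup_on f lo hi <= sup_on f lo hi - eps); [| lra].
  apply sup_on_le; [exact Hlh |]. intros s Hs. apply Rnot_lt_le. intros Hlt.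
  apply Hnone. now exists s.
Qed.

Lemma inf_on_glb m : lo <= hi -> (forall s, lo <= s <= hi -> m <= f s) ->
  is_lub (fun y => exists s, lo <= s <= hi /\ - y = f s) (- inf_on f lo hi).
Proof.
  intros Hlh Hm. unfold inf_on, Rinf. rewrite Ropp_involutive. apply Rsup_lub.
  - exists (- f lo), lo. split; [lra | ring].
  - exists (- m). intros y [s [Hs Hy]]. specialize (Hm s Hs). lra.
Qed.

Lemma inf_on_le m s : (forall s, lo <= s <= hi -> m <= f s) -> lo <= s <= hi ->
  inf_on f lo hi <= f s.
Proof.
  intros Hm Hs. destruct (inf_on_glb m) as [Hub _]; [lra | exact Hm |].
  assert (- f s <= - inf_on f lo hi); [| lra].
  apply Hub. exists s. split; [exact Hs | ring].
Qed.

Lemma inf_on_ge m : lo <= hi -> (forall s, lo <= s <= hi -> m <= f s) -> m <= inf_on f lo hi.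
Proof.
  intros Hlh Hm. destruct (inf_on_glb m) as [_ Hleast]; [lra | exact Hm |].
  assert (- inf_on f lo hi <= - m); [| lra].
  apply Hleast. intros y [s [Hs Hy]]. specialize (Hm s Hs). lra.
Qed.

End SupOn.

(** Bootstrap principles: if every upper bound M of G on [u,v] improves to
    max K0 (M - c)^+ with K0 >= 0, then K0 itself is an upper bound (apply
    this to M = sup G); dually for lower bounds. *)
Lemma sup_bootstrap (G : R -> R) u v c K0 :
  u <= v -> 0 < c -> 0 <= K0 -> (exists B, forall x, u <= x <= v -> G x <= B) ->
  (forall M, (forall x, u <= x <= v -> G x <= M) ->
     forall x, u <= x <= v -> G x <= Rmax K0 (posp (M - c))) ->
  forall x, u <= x <= v -> G x <= K0.
Proof.
  intros Huv Hc HK0 [B HB] Himprove.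
  set (M := sup_on G u v).
  assert (HM : forall x, u <= x <= v -> G x <= M) by (intros; eapply sup_on_ge; eauto).
  assert (HMle : M <= Rmax K0 (posp (M - c))) by (apply sup_on_le; [exact Huv | now apply Himprove]).
  assert (M <= K0).
  { unfold Rmax, posp in HMle. destruct (Rle_dec K0 (Rmax (M - c) 0)); [| lra].
    unfold Rmax in *. destruct (Rle_dec (M - c) 0); lra. }
  intros x Hx. specialize (HM x Hx). lra.
Qed.

Lemma inf_bootstrap (G : R -> R) u v c K0 :
  u <= v -> 0 < c -> (exists B, forall x, u <= x <= v -> B <= G x) ->
  (forall m, (forall x, u <= x <= v -> m <= G x) ->
     forall x, u <= x <= v -> Rmin K0 (m + c) <= G x) ->
  forall x, u <= x <= v -> K0 <= G x.
Proof.
  intros Huv Hc [B HB] Himprove.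
  set (m := inf_on G u v).
  assert (Hm : forall x, u <= x <= v -> m <= G x) by (intros; eapply inf_on_le; eauto).
  assert (Hmge : Rmin K0 (m + c) <= m) by (apply inf_on_ge; [exact Huv | now apply Himprove]).
  assert (K0 <= m) by (unfold Rmin in Hmge; destruct (Rle_dec K0 (m + c)); lra).
  intros x Hx. specialize (Hm x Hx). lra.
Qed.

(** * Real induction *)

Lemma real_ind (A B : R) (P : R -> Prop) :
  A <= B -> P A ->
  (forall x, A <= x < B -> (forall y, A <= y <= x -> P y) ->
       exists d, 0 < d /\ forall y, x < y < x + d -> P y) ->
  (forall x, A < x <= B -> (forall y, A <= y < x -> P y) -> P x) ->
  forall x, A <= x <= B -> P x.
Proof.
  intros HAB HA Hstep Hlim.
  set (S := fun x => A <= x <= B /\ forall y, A <= y <= x -> P y).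
  assert (HAS : S A) by (split; [lra | intros y Hy; replace y with A by lra; exact HA]).
  assert (HS : is_lub S (Rsup S)).
  { apply Rsup_lub; [now exists A |]. exists B. intros x [Hx _]. lra. }
  set (s := Rsup S) in *.
  assert (HAs : A <= s) by (apply (proj1 HS); exact HAS).
  assert (HsB : s <= B) by (apply (proj2 HS); intros x [Hx _]; lra).
  assert (Hbelow : forall y, A <= y < s -> P y).
  { intros y Hy. apply NNPP. intros Hny. assert (s <= y); [| lra].
    apply (proj2 HS). intros x [Hx HxP]. apply Rnot_lt_le. intros Hyx. apply Hny, HxP. lra. }
  assert (Hupto : forall y, A <= y <= s -> P y).
  { intros y Hy. destruct (Req_dec y s) as [-> | Hne]; [| apply Hbelow; lra].
    destruct (Req_dec s A) as [E | E]; [rewrite E; exact HA |]. apply Hlim; [lra | exact Hbelow]. }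
  assert (HsBeq : s = B).
  { destruct (Req_dec s B) as [E | E]; [exact E | exfalso].
    destruct (Hstep s) as [d [Hd Hd']]; [lra | exact Hupto |].
    set (z := Rmin (s + d / 2) B).
    assert (Hz1 : z <= s + d / 2) by apply Rmin_l. assert (Hz2 : z <= B) by apply Rmin_r.
    assert (Hzs : z <= s).
    { apply (proj1 HS). split; [split; [apply Rmin_glb; lra | exact Hz2] |].
      intros y Hy. destruct (Rle_dec y s); [apply Hupto; lra | apply Hd'; lra]. }
    unfold z, Rmin in Hzs. destruct (Rle_dec (s + d / 2) B); lra. }
  intros x Hx. apply Hupto. lra.
Qed.

(** * Cadlag functions *)

Definition is_left_lim (f : R -> R) (t l : R) : Prop :=
  forall eps, 0 < eps -> exists d, 0 < d /\ forall s, t - d < s < t -> Rabs (f s - l) < eps.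

Definition left_cauchy (f : R -> R) (t : R) : Prop :=
  forall eps, 0 < eps -> exists d, 0 < d /\
    forall x y, t - d < x < t -> t - d < y < t -> Rabs (f x - f y) < eps.

Lemma INR_small d : 0 < d -> exists N, forall n, (n >= N)%nat -> 0 < / (INR n + 1) < d.
Proof.
  intros Hd. destruct (archimed_cor1 d Hd) as [N [HN HN0]].
  exists N. intros n Hn.
  assert (0 < INR N) by (apply lt_0_INR; lia).
  assert (INR N <= INR n) by (apply le_INR; lia).
  split; [apply Rinv_0_lt_compat; lra |].
  apply Rle_lt_trans with (/ INR N); [apply Rinv_le_contravar; lra | exact HN].
Qed.

Lemma cauchy_left_lim f t : left_cauchy f t -> exists l, is_left_lim f t l.
Proof.
  intros HC.
  set (u := fun n : nat => f (t - / (INR n + 1))).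
  assert (Hu : Cauchy_crit u).
  { intros eps He. destruct (HC eps He) as [d [Hd Hd']].
    destruct (INR_small d Hd) as [N HN]. exists N. intros n m Hn Hm.
    specialize (HN n Hn) as H1. specialize (HN m Hm) as H2. apply Hd'; lra. }
  destruct (R_complete u Hu) as [l Hl].
  exists l. intros eps He.
  destruct (HC (eps / 2)) as [d [Hd Hd']]; [lra |].
  exists d. split; [exact Hd |]. intros s Hs.
  destruct (Hl (eps / 2)) as [N1 HN1]; [lra |].
  destruct (INR_small d Hd) as [N2 HN2].
  set (n := max N1 N2).
  specialize (HN1 n ltac:(lia)). specialize (HN2 n ltac:(lia)). unfold R_dist, u in HN1.
  specialize (Hd' s (t - / (INR n + 1)) Hs ltac:(lra)).
  pose proof (Rabs_triang (f s - f (t - / (INR n + 1))) (f (t - / (INR n + 1)) - l)).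
  replace (f s - f (t - / (INR n + 1)) + (f (t - / (INR n + 1)) - l)) with (f s - l) in * by ring.
  lra.
Qed.

Lemma left_lim_cauchy f t l : is_left_lim f t l -> left_cauchy f t.
Proof.
  intros H eps He. destruct (H (eps / 2)) as [d [Hd Hd']]; [lra |].
  exists d. split; [exact Hd |]. intros x y Hx Hy.
  pose proof (Hd' x Hx). pose proof (Hd' y Hy).
  pose proof (Rabs_triang (f x - l) (- (f y - l))). rewrite Rabs_Ropp in *.
  replace (f x - l + - (f y - l)) with (f x - f y) in * by ring. lra.
Qed.

Lemma cadlag_of_cauchy f : (forall t, 0 <= t -> right_cont f t) ->
  (forall t, 0 < t -> left_cauchy f t) -> is_D f.
Proof.
  intros Hr Hl t Ht. split; [now apply Hr |]. intros Htp. now apply cauchy_left_lim, Hl.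
Qed.

Lemma left_lim_le f t l c d : is_left_lim f t l -> 0 < d ->
  (forall s, t - d < s < t -> f s <= c) -> l <= c.
Proof.
  intros Hl Hd Hc. apply Rnot_lt_le. intros H.
  destruct (Hl (l - c)) as [d1 [Hd1 Hd1']]; [lra |].
  set (s := t - Rmin d d1 / 2).
  assert (0 < Rmin d d1) by (apply Rmin_glb_lt; lra).
  pose proof (Rmin_l d d1). pose proof (Rmin_r d d1).
  specialize (Hd1' s ltac:(unfold s; lra)). specialize (Hc s ltac:(unfold s; lra)).
  apply Rabs_def2 in Hd1'. lra.
Qed.

Lemma left_lim_ge f t l c d : is_left_lim f t l -> 0 < d ->
  (forall s, t - d < s < t -> c <= f s) -> c <= l.
Proof.
  intros Hl Hd Hc. apply Rnot_lt_le. intros H.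
  destruct (Hl (c - l)) as [d1 [Hd1 Hd1']]; [lra |].
  set (s := t - Rmin d d1 / 2).
  assert (0 < Rmin d d1) by (apply Rmin_glb_lt; lra).
  pose proof (Rmin_l d d1). pose proof (Rmin_r d d1).
  specialize (Hd1' s ltac:(unfold s; lra)). specialize (Hc s ltac:(unfold s; lra)).
  apply Rabs_def2 in Hd1'. lra.
Qed.

Lemma left_lim_unique f t l1 l2 : is_left_lim f t l1 -> is_left_lim f t l2 -> l1 = l2.
Proof.
  intros H1 H2.
  assert (Hcl : forall l l', is_left_lim f t l -> is_left_lim f t l' -> l <= l').
  { intros l l' Hl Hl'. apply Rnot_lt_le. intros Hlt.
    destruct (Hl' ((l - l') / 2)) as [d [Hd Hd']]; [lra |].
    assert (l <= l' + (l - l') / 2); [| lra].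
    apply (left_lim_le f t l _ d Hl Hd). intros s Hs.
    specialize (Hd' s Hs). apply Rabs_def2 in Hd'. lra. }
  apply Rle_antisym; auto.
Qed.

Lemma left_lim_plus f g t lf lg : is_left_lim f t lf -> is_left_lim g t lg ->
  is_left_lim (fun s => f s + g s) t (lf + lg).
Proof.
  intros Hf Hg eps He.
  destruct (Hf (eps / 2)) as [d1 [Hd1 H1]]; [lra |].
  destruct (Hg (eps / 2)) as [d2 [Hd2 H2]]; [lra |].
  exists (Rmin d1 d2). split; [apply Rmin_glb_lt; lra |].
  intros s Hs. pose proof (Rmin_l d1 d2). pose proof (Rmin_r d1 d2).
  specialize (H1 s ltac:(lra)). specialize (H2 s ltac:(lra)).
  pose proof (Rabs_triang (f s - lf) (g s - lg)).
  replace (f s - lf + (g s - lg)) with (f s + g s - (lf + lg)) in * by ring. lra.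
Qed.

Lemma left_lim_opp f t l : is_left_lim f t l -> is_left_lim (fun s => - f s) t (- l).
Proof.
  intros Hf eps He. destruct (Hf eps He) as [d [Hd Hd']]. exists d. split; [exact Hd |].
  intros s Hs. replace (- f s - - l) with (- (f s - l)) by ring. rewrite Rabs_Ropp. now apply Hd'.
Qed.

Lemma left_lim_minus f g t lf lg : is_left_lim f t lf -> is_left_lim g t lg ->
  is_left_lim (fun s => f s - g s) t (lf - lg).
Proof. intros Hf Hg. exact (left_lim_plus _ _ t _ _ Hf (left_lim_opp g t lg Hg)). Qed.

Lemma right_cont_plus f g t : right_cont f t -> right_cont g t ->
  right_cont (fun s => f s + g s) t.
Proof.
  intros Hf Hg eps He.
  destruct (Hf (eps / 2)) as [d1 [Hd1 H1]]; [lra |].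
  destruct (Hg (eps / 2)) as [d2 [Hd2 H2]]; [lra |].
  exists (Rmin d1 d2). split; [apply Rmin_glb_lt; lra |].
  intros s Hs. pose proof (Rmin_l d1 d2). pose proof (Rmin_r d1 d2).
  specialize (H1 s ltac:(lra)). specialize (H2 s ltac:(lra)).
  pose proof (Rabs_triang (f s - f t) (g s - g t)).
  replace (f s - f t + (g s - g t)) with (f s + g s - (f t + g t)) in * by ring. lra.
Qed.

Lemma right_cont_opp f t : right_cont f t -> right_cont (fun s => - f s) t.
Proof.
  intros Hf eps He. destruct (Hf eps He) as [d [Hd Hd']]. exists d. split; [exact Hd |].
  intros s Hs. replace (- f s - - f t) with (- (f s - f t)) by ring. rewrite Rabs_Ropp. now apply Hd'.
Qed.

Lemma is_D_plus f g : is_D f -> is_D g -> is_D (fun s => f s + g s).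
Proof.
  intros Hf Hg t Ht. destruct (Hf t Ht) as [Hfr Hfl]. destruct (Hg t Ht) as [Hgr Hgl].
  split; [now apply right_cont_plus |].
  intros Htp. destruct (Hfl Htp) as [lf Hlf]. destruct (Hgl Htp) as [lg Hlg].
  exists (lf + lg). now apply left_lim_plus.
Qed.

Lemma is_D_opp f : is_D f -> is_D (fun s => - f s).
Proof.
  intros Hf t Ht. destruct (Hf t Ht) as [Hfr Hfl].
  split; [now apply right_cont_opp |].
  intros Htp. destruct (Hfl Htp) as [l Hl]. exists (- l). now apply left_lim_opp.
Qed.

Lemma is_D_minus f g : is_D f -> is_D g -> is_D (fun s => f s - g s).
Proof. intros Hf Hg. exact (is_D_plus f _ Hf (is_D_opp g Hg)). Qed.

Lemma is_D_const c : is_D (fun _ => c).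
Proof.
  intros t Ht. split.
  - intros eps He. exists 1. split; [lra |]. intros s Hs. rewrite Rminus_diag, Rabs_R0. exact He.
  - intros Htp. exists c. intros eps He. exists 1. split; [lra |].
    intros s Hs. rewrite Rminus_diag, Rabs_R0. exact He.
Qed.

Lemma is_D_comp_lip (h f : R -> R) : (forall x y, Rabs (h x - h y) <= Rabs (x - y)) ->
  is_D f -> is_D (fun s => h (f s)).
Proof.
  intros Hh Hf t Ht. destruct (Hf t Ht) as [Hfr Hfl]. split.
  - intros eps He. destruct (Hfr eps He) as [d [Hd Hd']]. exists d. split; [exact Hd |].
    intros s Hs. eapply Rle_lt_trans; [apply Hh | now apply Hd'].
  - intros Htp. destruct (Hfl Htp) as [l Hl]. exists (h l). intros eps He.
    destruct (Hl eps He) as [d [Hd Hd']]. exists d. split; [exact Hd |].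
    intros s Hs. eapply Rle_lt_trans; [apply Hh | now apply Hd'].
Qed.

Lemma D_bounded f T : is_D f -> 0 <= T -> exists B, forall s, 0 <= s <= T -> Rabs (f s) <= B.
Proof.
  intros Hf HT.
  set (P := fun x => exists B, forall s, 0 <= s <= x -> Rabs (f s) <= B).
  assert (HP : forall x, 0 <= x <= T -> P x).
  { apply real_ind; [exact HT | | |].
    - exists (Rabs (f 0)). intros s Hs. replace s with 0 by lra. lra.
    - intros x Hx Hall. destruct (Hall x ltac:(lra)) as [B HB].
      destruct (Hf x ltac:(lra)) as [Hr _]. destruct (Hr 1 Rlt_0_1) as [d [Hd Hd']].
      exists d. split; [exact Hd |]. intros y Hy. exists (Rmax B (Rabs (f x) + 1)).
      intros s Hs. destruct (Rle_dec s x).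
      + eapply Rle_trans; [apply HB; lra | apply Rmax_l].
      + eapply Rle_trans; [| apply Rmax_r]. specialize (Hd' s ltac:(lra)).
        pose proof (Rabs_triang_inv (f s) (f x)). lra.
    - intros x Hx Hall. destruct (Hf x ltac:(lra)) as [_ Hl]. destruct (Hl ltac:(lra)) as [l Hll].
      destruct (Hll 1 Rlt_0_1) as [d [Hd Hd']].
      set (y := Rmax 0 (x - d / 2)).
      assert (0 <= y) by apply Rmax_l. assert (x - d / 2 <= y) by apply Rmax_r.
      assert (y < x) by (unfold y, Rmax; destruct (Rle_dec 0 (x - d / 2)); lra).
      destruct (Hall y ltac:(lra)) as [B HB].
      exists (Rmax (Rmax B (Rabs l + 1)) (Rabs (f x))).
      intros s Hs. destruct (Rle_dec s y).
      + eapply Rle_trans; [apply HB; lra | eapply Rle_trans; apply Rmax_l].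
      + destruct (Req_dec s x) as [-> | E]; [apply Rmax_r |].
        eapply Rle_trans; [| apply Rmax_l]. eapply Rle_trans; [| apply Rmax_r].
        specialize (Hd' s ltac:(lra)). pose proof (Rabs_triang_inv (f s) l). lra. }
  destruct (HP T ltac:(lra)) as [B HB]. now exists B.
Qed.

Definition osc_part (f : R -> R) (c T : R) (m : nat) (t : nat -> R) : Prop :=
  t O = 0 /\ t m = T /\ (forall i, (i < m)%nat -> t i < t (S i)) /\
  (forall i, (i < m)%nat -> forall y z, t i <= y < t (S i) -> t i <= z < t (S i) ->
     Rabs (f y - f z) < c).

Lemma osc_extend f c T m t y : osc_part f c T m t -> T < y ->
  (forall u v, T <= u < y -> T <= v < y -> Rabs (f u - f v) < c) ->
  osc_part f c y (S m) (fun i => if Nat.leb i m then t i else y).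
Proof.
  intros [H0 [Hm [Hlt Hosc]]] Hy Hw. split; [| split; [| split]].
  - exact H0.
  - destruct (Nat.leb_spec (S m) m); [lia | reflexivity].
  - intros i Hi. destruct (Nat.leb_spec i m), (Nat.leb_spec (S i) m); try lia.
    + apply Hlt. lia.
    + replace i with m by lia. lra.
  - intros i Hi. destruct (Nat.leb_spec i m), (Nat.leb_spec (S i) m); try lia.
    + apply Hosc. lia.
    + replace i with m by lia. rewrite Hm. exact Hw.
Qed.

Lemma osc_of_center (f : R -> R) x c u v : Rabs (f u - x) < c -> Rabs (f v - x) < c ->
  Rabs (f u - f v) < 2 * c.
Proof.
  intros Hu Hv. pose proof (Rabs_triang (f u - x) (- (f v - x))). rewrite Rabs_Ropp in *.
  replace (f u - x + - (f v - x)) with (f u - f v) in * by ring. lra.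
Qed.

Lemma osc_exists f c T : is_D f -> 0 < c -> 0 <= T -> exists m t, osc_part f c T m t.
Proof.
  intros Hf Hc HT.
  enough (HH : forall x, 0 <= x <= T -> exists m t, osc_part f c x m t) by (apply HH; lra).
  apply real_ind; [exact HT | | |].
  - exists O, (fun _ => 0). split; [reflexivity | split; [reflexivity | split]]; intros; lia.
  - intros x Hx Hall. destruct (Hall x ltac:(lra)) as [m [t Hp]].
    destruct (Hf x ltac:(lra)) as [Hr _]. destruct (Hr (c / 2)) as [d [Hd Hd']]; [lra |].
    exists d. split; [exact Hd |]. intros y Hy. exists (S m), (fun i => if Nat.leb i m then t i else y).
    apply (osc_extend f c x m t y Hp); [lra |]. intros u v Hu Hv.
    replace c with (2 * (c / 2)) by field. apply (osc_of_center f (f x)); apply Hd'; lra.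
  - intros x Hx Hall. destruct (Hf x ltac:(lra)) as [_ Hl]. destruct (Hl ltac:(lra)) as [l Hll].
    destruct (Hll (c / 2)) as [d [Hd Hd']]; [lra |].
    set (y0 := Rmax 0 (x - d / 2)).
    assert (0 <= y0) by apply Rmax_l. assert (x - d / 2 <= y0) by apply Rmax_r.
    assert (y0 < x) by (unfold y0, Rmax; destruct (Rle_dec 0 (x - d / 2)); lra).
    destruct (Hall y0 ltac:(lra)) as [m [t Hp]].
    exists (S m), (fun i => if Nat.leb i m then t i else x).
    apply (osc_extend f c y0 m t x Hp); [lra |]. intros u v Hu Hv.
    replace c with (2 * (c / 2)) by field. apply (osc_of_center f l); apply Hd'; lra.
Qed.

Lemma osc_mono f c T m t : osc_part f c T m t -> forall i j, (i <= j <= m)%nat -> t i <= t j.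
Proof.
  intros [_ [_ [Hlt _]]] i j [Hij Hjm]. induction j.
  - replace i with O by lia. lra.
  - destruct (Nat.eq_dec i (S j)) as [-> | E]; [lra |].
    specialize (IHj ltac:(lia) ltac:(lia)). specialize (Hlt j ltac:(lia)). lra.
Qed.

Lemma osc_piece_nonneg f c T m t : osc_part f c T m t ->
  forall i, (i < m)%nat -> 0 <= t i < t (S i).
Proof.
  intros Hp i Hi. pose proof (osc_mono _ _ _ _ _ Hp O i ltac:(lia)).
  destruct Hp as [H0 [_ [Hlt _]]]. specialize (Hlt i Hi). lra.
Qed.

Lemma osc_cover f c T m t : osc_part f c T m t -> forall s, 0 <= s < T ->
  exists i, (i < m)%nat /\ t i <= s < t (S i).
Proof.
  intros Hp.
  assert (Hk : forall k, (k <= m)%nat -> forall s, 0 <= s < t k ->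
             exists i, (i < k)%nat /\ t i <= s < t (S i)).
  { induction k; intros Hk s Hs; [destruct Hp as [H0 _]; lra |].
    destruct (Rlt_dec s (t k)).
    - destruct (IHk ltac:(lia) s ltac:(lra)) as [i [Hi Hi']]. exists i. split; [lia | exact Hi'].
    - exists k. split; [lia | lra]. }
  intros s Hs. destruct Hp as [_ [Hm _]]. rewrite <- Hm in Hs. exact (Hk m (le_n m) s Hs).
Qed.

(** * Running suprema *)

Section RunningSup.
Variable g : R -> R.
Hypothesis g_D : is_D g.

Definition run_sup (t : R) : R := sup_on g 0 t.

Lemma g_bounded_above t : 0 <= t -> exists M, forall s, 0 <= s <= t -> g s <= M.
Proof.
  intros Ht. destruct (D_bounded g t g_D Ht) as [B HB]. exists B.
  intros s Hs. specialize (HB s Hs). pose proof (RRle_abs (g s)). lra.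
Qed.

Lemma run_sup_ge s t : 0 <= s <= t -> g s <= run_sup t.
Proof.
  intros Hs. destruct (g_bounded_above t) as [M HM]; [lra |]. exact (sup_on_ge g 0 t M s HM Hs).
Qed.

Lemma run_sup_le t M : 0 <= t -> (forall s, 0 <= s <= t -> g s <= M) -> run_sup t <= M.
Proof. intros. now apply sup_on_le. Qed.

Lemma run_sup_mono s t : 0 <= s <= t -> run_sup s <= run_sup t.
Proof. intros. apply run_sup_le; [lra |]. intros x Hx. apply run_sup_ge. lra. Qed.

Lemma run_sup_rc t : 0 <= t -> right_cont run_sup t.
Proof.
  intros Ht eps He. destruct (g_D t Ht) as [Hr _].
  destruct (Hr (eps / 2)) as [d [Hd Hd']]; [lra |].
  exists d. split; [exact Hd |]. intros s Hs.
  assert (run_sup t <= run_sup s) by (apply run_sup_mono; lra).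
  assert (run_sup s <= run_sup t + eps / 2).
  { apply run_sup_le; [lra |]. intros x Hx. pose proof (run_sup_ge t t ltac:(lra)).
    destruct (Rle_dec x t); [pose proof (run_sup_ge x t ltac:(lra)); lra |].
    specialize (Hd' x ltac:(lra)). apply Rabs_def2 in Hd'. lra. }
  rewrite Rabs_right; lra.
Qed.

Lemma run_sup_lc t : 0 < t -> left_cauchy run_sup t.
Proof.
  intros Ht eps He. destruct (g_D t ltac:(lra)) as [_ Hl]. destruct (Hl Ht) as [l Hll].
  destruct (Hll (eps / 4)) as [d [Hd Hd']]; [lra |].
  exists (Rmin d t). split; [apply Rmin_glb_lt; lra |].
  pose proof (Rmin_l d t). pose proof (Rmin_r d t).
  assert (Hnear : forall x y, t - Rmin d t < y <= x -> x < t ->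
            run_sup y <= run_sup x <= run_sup y + eps / 2).
  { intros x y Hy Hx. split; [apply run_sup_mono; lra |].
    apply run_sup_le; [lra |]. intros s Hs. pose proof (run_sup_ge y y ltac:(lra)).
    destruct (Rle_dec s y); [pose proof (run_sup_ge s y ltac:(lra)); lra |].
    pose proof (Hd' s ltac:(lra)) as Hs'. pose proof (Hd' y ltac:(lra)) as Hy'.
    apply Rabs_def2 in Hs'. apply Rabs_def2 in Hy'. lra. }
  intros x y Hx Hy. destruct (Rle_dec y x).
  - pose proof (Hnear x y ltac:(lra) ltac:(lra)). rewrite Rabs_right; lra.
  - pose proof (Hnear y x ltac:(lra) ltac:(lra)). rewrite Rabs_left1; lra.
Qed.

Lemma run_sup_D : is_D run_sup.
Proof. apply cadlag_of_cauchy; [exact run_sup_rc | exact run_sup_lc]. Qed.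

Lemma run_sup_jump t l : 0 < t -> is_left_lim run_sup t l ->
  l <= run_sup t <= Rmax l (g t).
Proof.
  intros Ht Hl. split.
  - apply (left_lim_le run_sup t l _ t Hl Ht). intros s Hs. apply run_sup_mono. lra.
  - apply run_sup_le; [lra |]. intros s Hs. destruct (Req_dec s t) as [-> | E]; [apply Rmax_r |].
    eapply Rle_trans; [| apply Rmax_l].
    apply (left_lim_ge run_sup t l _ (t - s) Hl ltac:(lra)). intros x Hx. apply run_sup_ge. lra.
Qed.

Lemma run_sup_flat u v c : 0 <= u <= v -> 0 < c -> 0 <= run_sup u ->
  (forall x, u <= x <= v -> g x <= posp (run_sup x - c)) -> run_sup v = run_sup u.
Proof.
  intros Huv Hc Hu0 Hbelow.
  assert (Hle : forall x, u <= x <= v -> run_sup x <= run_sup u).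
  { apply (sup_bootstrap run_sup u v c); [lra | exact Hc | exact Hu0 | |].
    - exists (run_sup v). intros x Hx. apply run_sup_mono. lra.
    - intros M HM x Hx. apply run_sup_le; [lra |]. intros s Hs. destruct (Rle_dec s u).
      + eapply Rle_trans; [apply (run_sup_ge s u); lra | apply Rmax_l].
      + eapply Rle_trans; [| apply Rmax_r]. eapply Rle_trans; [apply Hbelow; lra |].
        apply posp_le. specialize (HM s ltac:(lra)). lra. }
  specialize (Hle v ltac:(lra)). pose proof (run_sup_mono u v ltac:(lra)). lra.
Qed.

End RunningSup.

Definition nonincr_on (f : R -> R) (P : R -> Prop) : Prop :=
  forall y z, P y -> P z -> y <= z -> f z <= f y.
Definition nondecr_on (f : R -> R) (P : R -> Prop) : Prop :=
  forall y z, P y -> P z -> y <= z -> f y <= f z.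
Definition monotone_on (f : R -> R) (P : R -> Prop) : Prop :=
  nonincr_on f P \/ nondecr_on f P.

(** * Positive variation *)

Section PositiveVariation.
Variable e : R -> R.

(** For a partition 0 = x_0 <= ... <= x_n <= t, the sum of the positive
    increments of e, plus the initial jump e(0)^+ from e(0-) = 0; the
    positive variation is the supremum of these sums. *)
Fixpoint pos_incr_sum (x : nat -> R) (n : nat) : R :=
  match n with
  | O => 0
  | S k => pos_incr_sum x k + posp (e (x (S k)) - e (x k))
  end.

Definition partition (x : nat -> R) (n : nat) (t : R) : Prop :=
  x O = 0 /\ (forall i, (i < n)%nat -> x i <= x (S i)) /\ x n <= t.

Definition pv_sum (t y : R) : Prop :=
  exists n x, partition x n t /\ y = posp (e 0) + pos_incr_sum x n.

Definition posvar (t : R) : R := Rsup (pv_sum t).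
Definition posvar_finite (t : R) : Prop := exists M, forall y, pv_sum t y -> y <= M.

Lemma pos_incr_sum_ext x x' n : (forall i, (i <= n)%nat -> x i = x' i) ->
  pos_incr_sum x n = pos_incr_sum x' n.
Proof.
  induction n; intros H; simpl; [reflexivity |].
  rewrite IHn by (intros; apply H; lia). rewrite (H n), (H (S n)) by lia. reflexivity.
Qed.

Lemma partition_le x n t : partition x n t -> forall i j, (i <= j <= n)%nat -> x i <= x j.
Proof.
  intros [_ [Hinc _]] i j [Hij Hjn]. induction j.
  - replace i with O by lia. lra.
  - destruct (Nat.eq_dec i (S j)) as [-> | E]; [lra |].
    specialize (IHj ltac:(lia) ltac:(lia)). specialize (Hinc j ltac:(lia)). lra.
Qed.

Lemma partition_range x n t : partition x n t -> forall i, (i <= n)%nat -> 0 <= x i <= t.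
Proof.
  intros Hp i Hi. pose proof (partition_le x n t Hp O i ltac:(lia)).
  pose proof (partition_le x n t Hp i n ltac:(lia)). destruct Hp as [Hx0 [_ Hxn]]. lra.
Qed.

Definition extend (x : nat -> R) (n : nat) (u : R) : nat -> R :=
  fun i => if Nat.leb i n then x i else u.

Lemma extend_partition x n s t : partition x n s -> s <= t -> partition (extend x n t) (S n) t.
Proof.
  intros Hp Hst. pose proof (partition_range x n s Hp) as Hr. destruct Hp as [H0 [Hinc Hn]].
  unfold extend. split; [| split].
  - exact H0.
  - intros i Hi. destruct (Nat.leb_spec i n), (Nat.leb_spec (S i) n); try lia.
    + apply Hinc. lia.
    + replace i with n by lia. lra.
  - destruct (Nat.leb_spec (S n) n); [lia | lra].
Qed.

Lemma extend_sum x n u : pos_incr_sum (extend x n u) (S n) = pos_incr_sum x n + posp (e u - e (x n)).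
Proof.
  simpl. rewrite (pos_incr_sum_ext (extend x n u) x n).
  - unfold extend. rewrite Nat.leb_refl. destruct (Nat.leb_spec (S n) n); [lia | reflexivity].
  - intros i Hi. unfold extend. destruct (Nat.leb_spec i n); [reflexivity | lia].
Qed.

Lemma pv_sum_extend x n s t : partition x n s -> s <= t ->
  pv_sum t (posp (e 0) + pos_incr_sum x n + posp (e t - e (x n))).
Proof.
  intros Hp Hst. exists (S n), (extend x n t). split; [now apply (extend_partition x n s t) |].
  rewrite extend_sum. ring.
Qed.

Lemma pv_sum_trivial t : 0 <= t -> pv_sum t (posp (e 0)).
Proof.
  intros Ht. exists O, (fun _ => 0). split; [| simpl; ring].
  split; [reflexivity | split; [intros; lia | simpl; lra]].
Qed.

Lemma pv_sum_mono s t y : s <= t -> pv_sum s y -> pv_sum t y.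
Proof. intros Hst [n [x [[H0 [H1 H2]] Hy]]]. exists n, x. repeat split; auto. lra. Qed.

Lemma posvar_lub t : 0 <= t -> posvar_finite t -> is_lub (pv_sum t) (posvar t).
Proof. intros Ht [M HM]. apply Rsup_lub; [exists (posp (e 0)); now apply pv_sum_trivial | now exists M]. Qed.

Lemma posvar_ge t y : 0 <= t -> posvar_finite t -> pv_sum t y -> y <= posvar t.
Proof. intros Ht Hb Hy. now apply (proj1 (posvar_lub t Ht Hb)). Qed.

Lemma posvar_le t M : 0 <= t -> (forall y, pv_sum t y -> y <= M) -> posvar t <= M.
Proof. intros Ht HM. apply (proj2 (posvar_lub t Ht (ex_intro _ M HM))). exact HM. Qed.

(** The proof splits a partition at its last point <= u. *)
Lemma pv_sum_majorize u v h M : 0 <= u <= v ->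
  (forall x x', u <= x <= x' -> x' <= v -> posp (e x' - e x) <= h x' - h x) ->
  (forall y, pv_sum u y -> y <= M) ->
  forall y, pv_sum v y -> y <= M + h v - h u.
Proof.
  intros Huv Hh HM y [n [x [Hp ->]]].
  pose proof (partition_range x n v Hp) as Hr.
  assert (Hbefore : forall k, (k <= n)%nat -> x k <= u ->
            posp (e 0) + pos_incr_sum x k + posp (e u - e (x k)) <= M).
  { intros k Hk Hxk. apply HM. apply (pv_sum_extend x k u u); [| lra].
    destruct Hp as [H0 [Hinc _]]. split; [exact H0 | split; [intros; apply Hinc; lia | exact Hxk]]. }
  assert (Hafter : forall k, (k <= n)%nat -> u < x k ->
            posp (e 0) + pos_incr_sum x k <= M + h (x k) - h u).
  { induction k as [| k IHk]; intros Hk Hxk; [destruct Hp as [H0 _]; lra |].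
    simpl. pose proof (Hr (S k) Hk). pose proof (partition_le x n v Hp k (S k) ltac:(lia)).
    destruct (Rle_dec (x k) u).
    + (* the increment straddles u: split it at u *)
      specialize (Hbefore k ltac:(lia) r).
      assert (posp (e (x (S k)) - e (x k)) <= posp (e u - e (x k)) + posp (e (x (S k)) - e u))
        by (unfold posp, Rmax; repeat destruct (Rle_dec _ _); lra).
      pose proof (Hh u (x (S k)) ltac:(lra) ltac:(lra)). lra.
    + specialize (IHk ltac:(lia) ltac:(lra)).
      pose proof (Hh (x k) (x (S k)) ltac:(lra) ltac:(lra)). lra. }
  assert (Hhuv : h u <= h v).
  { pose proof (Hh u v ltac:(lra) ltac:(lra)). pose proof (posp_ge0 (e v - e u)). lra. }
  destruct (Rle_dec (x n) u) as [Hxn | Hxn].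
  - specialize (Hbefore n ltac:(lia) Hxn). pose proof (posp_ge0 (e u - e (x n))). lra.
  - specialize (Hafter n ltac:(lia) ltac:(lra)). specialize (Hr n ltac:(lia)).
    pose proof (Hh (x n) v ltac:(lra) ltac:(lra)). pose proof (posp_ge0 (e v - e (x n))). lra.
Qed.

Lemma posvar_majorize u v h : 0 <= u <= v ->
  (forall x x', u <= x <= x' -> x' <= v -> posp (e x' - e x) <= h x' - h x) ->
  posvar_finite u -> posvar_finite v /\ posvar v <= posvar u + h v - h u.
Proof.
  intros Huv Hh Hb.
  assert (Hbound : forall y, pv_sum v y -> y <= posvar u + h v - h u).
  { apply (pv_sum_majorize u v h); [exact Huv | exact Hh |].
    intros y Hy. apply posvar_ge; [lra | exact Hb | exact Hy]. }
  split; [eexists; exact Hbound | apply posvar_le; [lra | exact Hbound]].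
Qed.

Lemma posvar_super u v : 0 <= u <= v -> posvar_finite v -> posvar u + posp (e v - e u) <= posvar v.
Proof.
  intros Huv Hb.
  assert (posvar u <= posvar v - posp (e v - e u)); [| lra].
  apply posvar_le; [lra |]. intros y [n [x [Hp ->]]].
  pose proof (extend_partition x n u u Hp ltac:(lra)) as Hp'.
  pose proof (pv_sum_extend (extend x n u) (S n) u v Hp' ltac:(lra)) as Hsum.
  rewrite extend_sum in Hsum.
  assert (Eu : extend x n u (S n) = u) by (unfold extend; destruct (Nat.leb_spec (S n) n); [lia | reflexivity]).
  rewrite Eu in Hsum.
  pose proof (posvar_ge v _ ltac:(lra) Hb Hsum). pose proof (posp_ge0 (e u - e (x n))). lra.
Qed.

Lemma posvar_finite_mono s t : s <= t -> posvar_finite t -> posvar_finite s.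
Proof. intros Hst [M HM]. exists M. intros y Hy. apply HM. eapply pv_sum_mono; eauto. Qed.

Lemma posvar_mono s t : 0 <= s <= t -> posvar_finite t -> posvar s <= posvar t.
Proof. intros. pose proof (posvar_super s t H H0). pose proof (posp_ge0 (e t - e s)). lra. Qed.

Lemma pv_sum_zero y : pv_sum 0 y -> y = posp (e 0).
Proof.
  intros [n [x [Hp ->]]].
  assert (pos_incr_sum x n = 0); [| lra].
  pose proof (partition_range x n 0 Hp) as Hr. clear Hp.
  induction n; [reflexivity |]. simpl. rewrite IHn by (intros; apply Hr; lia).
  pose proof (Hr n ltac:(lia)). pose proof (Hr (S n) ltac:(lia)).
  replace (x (S n)) with (x n) by lra. rewrite Rminus_diag, posp_neg; lra.
Qed.

Lemma posvar_finite_zero : posvar_finite 0.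
Proof. exists (posp (e 0)). intros y Hy. rewrite (pv_sum_zero y Hy). lra. Qed.

Lemma posvar_zero : posvar 0 = posp (e 0).
Proof.
  apply Rle_antisym.
  - apply posvar_le; [lra |]. intros y Hy. rewrite (pv_sum_zero y Hy). lra.
  - apply posvar_ge; [lra | exact posvar_finite_zero | apply pv_sum_trivial; lra].
Qed.

Lemma posvar_on_dn u v : 0 <= u <= v -> posvar_finite u ->
  nonincr_on e (fun x => u <= x <= v) -> posvar_finite v /\ posvar v = posvar u.
Proof.
  intros Huv Hb Hm.
  destruct (posvar_majorize u v (fun _ => 0) Huv) as [Hbv Hle]; [| exact Hb |].
  - intros x x' Hx Hx'. rewrite posp_neg; [lra |]. specialize (Hm x x' ltac:(lra) ltac:(lra) (proj2 Hx)). lra.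
  - split; [exact Hbv |]. pose proof (posvar_mono u v Huv Hbv). lra.
Qed.

Lemma posvar_on_up u v : 0 <= u <= v -> posvar_finite u ->
  nondecr_on e (fun x => u <= x <= v) -> posvar_finite v /\ posvar v = posvar u + e v - e u.
Proof.
  intros Huv Hb Hm.
  destruct (posvar_majorize u v e Huv) as [Hbv Hle]; [| exact Hb |].
  - intros x x' Hx Hx'. rewrite posp_pos; [lra |]. specialize (Hm x x' ltac:(lra) ltac:(lra) (proj2 Hx)). lra.
  - split; [exact Hbv |]. pose proof (posvar_super u v Huv Hbv). pose proof (posp_ge (e v - e u)). lra.
Qed.

Lemma posvar_piece_up u v M : 0 <= u < v -> posvar_finite u ->
  nondecr_on e (fun x => u <= x < v) -> (forall x, u <= x < v -> e x <= M) ->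
  posvar_finite v /\ posvar v <= posvar u + (M - e u) + posp (e v - M).
Proof.
  intros Huv Hb Hm HM.
  set (h := fun x => if Rlt_dec x v then e x else M + posp (e v - M)).
  destruct (posvar_majorize u v h ltac:(lra)) as [Hbv Hle]; [| exact Hb |].
  - intros x x' Hx Hx'. unfold h. destruct (Rlt_dec x' v), (Rlt_dec x v); try lra.
    + rewrite posp_pos; [lra |]. specialize (Hm x x' ltac:(lra) ltac:(lra) (proj2 Hx)). lra.
    + specialize (HM x ltac:(lra)). replace x' with v by lra.
      unfold posp, Rmax. repeat destruct (Rle_dec _ _); lra.
    + replace x with x' by lra. rewrite Rminus_diag, posp_neg; lra.
  - split; [exact Hbv |]. unfold h in Hle.
    destruct (Rlt_dec v v), (Rlt_dec u v); lra.
Qed.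

Lemma posvar_piece_dn u v m : 0 <= u < v -> posvar_finite u ->
  nonincr_on e (fun x => u <= x < v) -> (forall x, u <= x < v -> m <= e x) ->
  posvar_finite v /\ posvar v <= posvar u + posp (e v - m).
Proof.
  intros Huv Hb Hm Hlow.
  set (h := fun x => if Rlt_dec x v then 0 else posp (e v - m)).
  destruct (posvar_majorize u v h ltac:(lra)) as [Hbv Hle]; [| exact Hb |].
  - intros x x' Hx Hx'. unfold h. destruct (Rlt_dec x' v), (Rlt_dec x v); try lra.
    + rewrite posp_neg; [lra |]. specialize (Hm x x' ltac:(lra) ltac:(lra) (proj2 Hx)). lra.
    + replace x' with v by lra. rewrite Rminus_0_r. apply posp_le. specialize (Hlow x ltac:(lra)). lra.
    + replace x with x' by lra. rewrite Rminus_diag, posp_neg; lra.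
  - split; [exact Hbv |]. unfold h in Hle. destruct (Rlt_dec v v), (Rlt_dec u v); lra.
Qed.

Lemma posvar_rc t : 0 <= t -> right_cont e t -> posvar_finite t ->
  (exists d, 0 < d /\ monotone_on e (fun x => t <= x < t + d)) -> right_cont posvar t.
Proof.
  intros Ht Hr Hb [d [Hd Hmono]] eps He. destruct (Hr eps He) as [d2 [Hd2 Hd2']].
  exists (Rmin d d2). split; [apply Rmin_glb_lt; lra |].
  pose proof (Rmin_l d d2). pose proof (Rmin_r d d2).
  intros s Hs. destruct Hmono as [Hdn | Hup].
  - destruct (posvar_on_dn t s ltac:(lra) Hb) as [_ E].
    + intros y z Hy Hz. apply Hdn; lra.
    + rewrite E, Rminus_diag, Rabs_R0. lra.
  - destruct (posvar_on_up t s ltac:(lra) Hb) as [_ E].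
    + intros y z Hy Hz. apply Hup; lra.
    + rewrite E. replace (posvar t + e s - e t - posvar t) with (e s - e t) by ring. apply Hd2'. lra.
Qed.

Lemma posvar_lc t l : 0 < t -> is_left_lim e t l -> posvar_finite t ->
  (exists d, 0 < d <= t /\ monotone_on e (fun x => t - d < x < t)) -> left_cauchy posvar t.
Proof.
  intros Ht Hl Hb [d [Hd Hmono]] eps He.
  destruct (left_lim_cauchy e t l Hl eps He) as [d2 [Hd2 Hd2']].
  exists (Rmin d d2). split; [apply Rmin_glb_lt; lra |].
  pose proof (Rmin_l d d2). pose proof (Rmin_r d d2).
  assert (Hnear : forall x y, t - Rmin d d2 < y <= x -> x < t -> Rabs (posvar x - posvar y) < eps).
  { intros x y Hy Hx. assert (Hby : posvar_finite y) by (apply (posvar_finite_mono y t); [lra | exact Hb]).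
    destruct Hmono as [Hdn | Hup].
    - destruct (posvar_on_dn y x ltac:(lra) Hby) as [_ E].
      + intros y' z' Hy' Hz'. apply Hdn; lra.
      + rewrite E, Rminus_diag, Rabs_R0. lra.
    - destruct (posvar_on_up y x ltac:(lra) Hby) as [_ E].
      + intros y' z' Hy' Hz'. apply Hup; lra.
      + rewrite E. replace (posvar y + e x - e y - posvar y) with (e x - e y) by ring. apply Hd2'; lra. }
  intros x y Hx Hy. destruct (Rle_dec y x); [apply Hnear; lra |].
  rewrite Rabs_minus_sym. apply Hnear; lra.
Qed.

Lemma posvar_left_jump t l : 0 < t -> is_left_lim e t l -> posvar_finite t ->
  (exists d, 0 < d <= t /\ monotone_on e (fun x => t - d < x < t)) ->
  forall dl, 0 < dl -> exists y, 0 <= y < t /\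
    posvar t - posvar y <= posp (e t - l) + dl /\
    (posvar t - e t) - (posvar y - e y) <= posp (l - e t) + dl.
Proof.
  intros Ht Hl Hb [d [Hd Hmono]] dl Hdl.
  destruct (Hl dl Hdl) as [d2 [Hd2 Hd2']].
  assert (0 < Rmin d d2) by (apply Rmin_glb_lt; lra).
  pose proof (Rmin_l d d2). pose proof (Rmin_r d d2).
  set (y := t - Rmin d d2 / 2).
  assert (Hy : t - d < y < t /\ t - d2 < y) by (unfold y; lra).
  assert (Hby : posvar_finite y) by (apply (posvar_finite_mono y t); [lra | exact Hb]).
  specialize (Hd2' y ltac:(lra)). apply Rabs_def2 in Hd2'.
  exists y. split; [lra |]. destruct Hmono as [Hdn | Hup].
  - assert (Hlow : forall x, y <= x < t -> l <= e x).
    { intros x Hx. apply (left_lim_le e t l (e x) (t - x) Hl ltac:(lra)).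
      intros s Hs. apply Hdn; lra. }
    destruct (posvar_piece_dn y t l ltac:(lra) Hby) as [_ Hle]; [| exact Hlow |].
    + intros y' z' Hy' Hz'. apply Hdn; lra.
    + unfold posp, Rmax in *. repeat destruct (Rle_dec _ _); lra.
  - assert (Hhigh : forall x, y <= x < t -> e x <= l).
    { intros x Hx. apply (left_lim_ge e t l (e x) (t - x) Hl ltac:(lra)).
      intros s Hs. apply Hup; lra. }
    destruct (posvar_piece_up y t l ltac:(lra) Hby) as [_ Hle]; [| exact Hhigh |].
    + intros y' z' Hy' Hz'. apply Hup; lra.
    + specialize (Hhigh y ltac:(lra)).
      unfold posp, Rmax in *. repeat destruct (Rle_dec _ _); lra.
Qed.

End PositiveVariation.

Fixpoint fsum (c : nat -> R) (N : nat) : R :=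
  match N with O => 0 | S k => fsum c k + c k end.

Lemma cover_sum_fsum F al be N : cover_sum F al be N = fsum (fun n => F (be n) - F (al n)) N.
Proof. induction N; simpl; [reflexivity | now rewrite IHN]. Qed.

Lemma fsum_le c d N : (forall n, c n <= d n) -> fsum c N <= fsum d N.
Proof. intros H. induction N; simpl; [lra |]. specialize (H N). lra. Qed.

Lemma fsum_le_extend c N N' : (forall n, 0 <= c n) -> (N <= N')%nat -> fsum c N <= fsum c N'.
Proof. intros H HN. induction HN; simpl; [lra |]. specialize (H m). lra. Qed.

Lemma fsum_term c N k : (forall n, 0 <= c n) -> (k < N)%nat -> c k <= fsum c N.
Proof.
  intros H Hk. pose proof (fsum_le_extend c k N H ltac:(lia)).
  induction N; [lia |]. simpl. destruct (Nat.eq_dec k N) as [-> | E].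
  - pose proof (fsum_le_extend c O N H ltac:(lia)). simpl in *. lra.
  - specialize (IHN ltac:(lia) (fsum_le_extend c k N H ltac:(lia))). specialize (H N). lra.
Qed.

Lemma fsum_minus c d N : fsum d N - fsum c N = fsum (fun n => d n - c n) N.
Proof. induction N; simpl; [ring | rewrite <- IHN; ring]. Qed.

Lemma pow2_pos n : 0 < 2 ^ n.
Proof. apply pow_lt. lra. Qed.

Lemma fsum_halves eps N : 0 <= eps -> fsum (fun n => eps / 2 ^ S n) N <= eps.
Proof.
  intros He. assert (Hgeo : fsum (fun n => eps / 2 ^ S n) N = eps - eps / 2 ^ N).
  { induction N; cbn [fsum]; [simpl; field |]. rewrite IHN. simpl. field. apply Rgt_not_eq, pow2_pos. }
  rewrite Hgeo. assert (0 <= eps / 2 ^ N) by (unfold Rdiv; apply Rmult_le_pos; [lra | apply Rlt_le, Rinv_0_lt_compat, pow2_pos]). lra.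
Qed.

(** * Lebesgue-Stieltjes null sets *)

Lemma LS_null_sub F (A B : R -> Prop) : (forall s, B s -> A s) -> LS_null F A -> LS_null F B.
Proof.
  intros HBA [H0 Hcov]. split; [intros HB; exact (H0 (HBA 0 HB)) |].
  intros eps He. destruct (Hcov eps He) as [al [be [Hab [Hs Hsum]]]].
  exists al, be. split; [exact Hab | split; [| exact Hsum]].
  intros s Hspos HB. exact (Hs s Hspos (HBA s HB)).
Qed.

(** Countable subadditivity in the form needed here: if A /\ (0,oo) is covered
    by countably many pieces, each fitting into one interval (al,be] of
    arbitrarily small F-mass, then A is F-null (the i-th piece gets mass
    eps / 2^(i+1)). *)
Lemma LS_null_countable {I : Type} (enum : nat -> I) (F : R -> R) (A : R -> Prop)
    (piece : I -> R -> Prop) :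
  (forall i, exists n, enum n = i) ->
  (A 0 -> F 0 = 0) ->
  (forall s, 0 < s -> A s -> exists i, piece i s) ->
  (forall i dl, 0 < dl -> exists al be, 0 <= al <= be /\ F be - F al <= dl /\
       forall s, piece i s -> al < s <= be) ->
  LS_null F A.
Proof.
  intros Henum H0 Hcov Hsmall. split; [exact H0 |]. intros eps He.
  assert (Hn : forall n, exists p : R * R, 0 <= fst p <= snd p /\
            F (snd p) - F (fst p) <= eps / 2 ^ (S n) /\
            forall s, piece (enum n) s -> fst p < s <= snd p).
  { intros n. destruct (Hsmall (enum n) (eps / 2 ^ (S n))) as [al [be Hab]].
    - apply Rdiv_lt_0_compat; [exact He | apply pow2_pos].
    - now exists (al, be). }
  destruct (choice _ Hn) as [p Hp].
  exists (fun n => fst (p n)), (fun n => snd (p n)). split; [| split].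
  - intros n. apply Hp.
  - intros s Hs HA. destruct (Hcov s Hs HA) as [i Hi]. destruct (Henum i) as [n <-].
    exists n. now apply Hp.
  - intros N. rewrite cover_sum_fsum. eapply Rle_trans; [| apply (fsum_halves eps N); lra].
    apply fsum_le. intros n. exact (proj1 (proj2 (Hp n))).
Qed.

Lemma exhaust_left u w s : u < w -> s < w -> exists k, s <= w - (w - u) / (INR k + 2).
Proof.
  intros Huw Hsw. destruct (INR_small ((w - s) / (w - u))) as [k Hk]; [apply Rdiv_lt_0_compat; lra |].
  exists k. specialize (Hk k (le_n k)) as [_ Hk]. pose proof (pos_INR k).
  assert ((w - u) / (INR k + 2) <= (w - u) / (INR k + 1)).
  { unfold Rdiv. apply Rmult_le_compat_l; [lra | apply Rinv_le_contravar; lra]. }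
  assert ((w - u) / (INR k + 1) < w - s); [| lra].
  apply (Rmult_lt_compat_l (w - u)) in Hk; [| lra].
  replace ((w - u) * ((w - s) / (w - u))) with (w - s) in Hk by (field; lra).
  exact Hk.
Qed.

Lemma exhaust_left_range u w k : u < w -> u <= w - (w - u) / (INR k + 2) < w.
Proof.
  intros Huw. pose proof (pos_INR k).
  assert (0 < (w - u) / (INR k + 2)) by (apply Rdiv_lt_0_compat; lra).
  assert ((w - u) / (INR k + 2) <= w - u); [| lra].
  apply (Rmult_le_reg_r (INR k + 2)); [lra |].
  unfold Rdiv. rewrite Rmult_assoc, Rinv_l by lra. nra.
Qed.

Lemma LS_null_of_pieces {J : Type} (enum : nat -> J) (F : R -> R) (A : R -> Prop)
    (u w : J -> R) (good : J -> Prop) :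
  (forall j, exists n, enum n = j) ->
  (A 0 -> F 0 = 0) ->
  (forall j, good j -> 0 <= u j < w j) ->
  (forall j be, good j -> u j <= be < w j -> F be = F (u j)) ->
  (forall j, good j -> 0 < u j -> forall dl, 0 < dl -> exists y, 0 <= y < u j /\ F (u j) - F y <= dl) ->
  (forall s, 0 < s -> A s -> exists j, good j /\ u j <= s < w j) ->
  LS_null F A.
Proof.
  intros Henum H0 Hord Hflat Hatom Hcov.
  set (be := fun j k => w j - (w j - u j) / (INR k + 2)).
  apply (LS_null_countable (fun n => let (p, k) := Cantor.of_nat n in (enum p, k)) F A
           (fun jk s => good (fst jk) /\ u (fst jk) <= s <= be (fst jk) (snd jk) /\ 0 < s)).
  - intros [j k]. destruct (Henum j) as [p <-]. exists (Cantor.to_nat (p, k)).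
    now rewrite Cantor.cancel_of_to.
  - exact H0.
  - intros s Hs HA. destruct (Hcov s Hs HA) as [j [Hj Hsj]].
    destruct (exhaust_left (u j) (w j) s) as [k Hk]; [apply Hord in Hj; lra | lra |].
    exists (j, k). simpl. unfold be. repeat split; auto; lra.
  - intros [j k] dl Hdl. simpl. destruct (classic (good j)) as [Hj | Hj].
    + pose proof (Hord j Hj) as Ho. pose proof (exhaust_left_range (u j) (w j) k (proj2 Ho)) as Hbe.
      fold (be j k) in Hbe. pose proof (Hflat j (be j k) Hj Hbe) as Hconst.
      destruct (Req_dec (u j) 0) as [E0 | E0].
      * exists 0, (be j k). split; [lra | split; [rewrite Hconst, E0; lra |]].
        intros s [_ [Hs1 Hs2]]. lra.
      * destruct (Hatom j Hj ltac:(lra) dl Hdl) as [y [Hy1 Hy2]].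
        exists y, (be j k). split; [lra | split; [rewrite Hconst; lra |]].
        intros s [_ [Hs1 Hs2]]. lra.
    + exists 0, 0. split; [lra | split; [lra |]]. intros s [Hgood _]. contradiction.
Qed.

Lemma choose_level s c : 0 <= s -> 0 < c -> exists k, / (INR k + 1) < c /\ s < INR k + 1.
Proof.
  intros Hs Hc. destruct (INR_small c Hc) as [N1 H1].
  destruct (INR_small (/ (s + 1))) as [N2 H2]; [apply Rinv_0_lt_compat; lra |].
  set (k := max N1 N2). exists k. split; [apply H1; lia |].
  specialize (H2 k ltac:(lia)) as [_ H2]. pose proof (pos_INR k).
  apply Rnot_le_lt. intros Hle.
  assert (/ (s + 1) <= / (INR k + 1)) by (apply Rinv_le_contravar; lra). lra.
Qed.

Lemma LS_null_positive_set (F q : R -> R) : is_D q ->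
  (q 0 > 0 -> F 0 = 0) ->
  (forall u be c, 0 <= u <= be -> 0 < c -> (forall x, u <= x <= be -> c <= q x) -> F be = F u) ->
  (forall t, 0 < t -> 0 < q t -> forall dl, 0 < dl -> exists y, 0 <= y < t /\ F t - F y <= dl) ->
  LS_null F (fun s => 0 <= s /\ q s > 0).
Proof.
  intros Hq H0 Hflat Hatom.
  assert (Hlevel : forall k, exists p : nat * (nat -> R),
            osc_part q (/ (INR k + 1)) (INR k + 1) (fst p) (snd p)).
  { intros k. pose proof (pos_INR k).
    destruct (osc_exists q (/ (INR k + 1)) (INR k + 1) Hq) as [m [t Hp]];
      [apply Rinv_0_lt_compat; lra | lra | now exists (m, t)]. }
  assert (Hlevels : exists (m : nat -> nat) (t : nat -> nat -> R),
            forall k, osc_part q (/ (INR k + 1)) (INR k + 1) (m k) (t k)).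
  { destruct (choice _ Hlevel) as [lev Hlev].
    exists (fun k => fst (lev k)), (fun k => snd (lev k)). exact Hlev. }
  destruct Hlevels as [m [t Hlev]].
  apply (LS_null_of_pieces Cantor.of_nat F _ (fun ki => t (fst ki) (snd ki))
           (fun ki => t (fst ki) (S (snd ki)))
           (fun ki => (snd ki < m (fst ki))%nat /\
              exists c, 0 < c /\ forall x, t (fst ki) (snd ki) <= x < t (fst ki) (S (snd ki)) -> c <= q x)).
  - intros ki. exists (Cantor.to_nat ki). apply Cantor.cancel_of_to.
  - intros [_ Hpos]. now apply H0.
  - intros [k i] [Hi _]. exact (osc_piece_nonneg _ _ _ _ _ (Hlev k) i Hi).
  - intros [k i] be [Hi [c [Hc Hlow]]] Hbe. simpl in *.
    pose proof (osc_piece_nonneg _ _ _ _ _ (Hlev k) i Hi).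
    apply (Hflat _ _ c); [lra | exact Hc |]. intros x Hx. apply Hlow. lra.
  - intros [k i] [Hi [c [Hc Hlow]]] Hu dl Hdl. simpl in *.
    pose proof (osc_piece_nonneg _ _ _ _ _ (Hlev k) i Hi).
    apply Hatom; [exact Hu | | exact Hdl]. specialize (Hlow (t k i) ltac:(lra)). lra.
  - intros s Hs [_ Hqs]. destruct (choose_level s (q s / 2)) as [k [Hk1 Hk2]]; [lra | lra |].
    destruct (osc_cover _ _ _ _ _ (Hlev k) s ltac:(lra)) as [i [Hi Hts]].
    exists (k, i). simpl. split; [| exact Hts]. split; [exact Hi |].
    exists (q s / 2). split; [lra |]. intros x Hx.
    destruct (Hlev k) as [_ [_ [_ Hosc]]]. specialize (Hosc i Hi x s Hx Hts).
    apply Rabs_def2 in Hosc. lra.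
Qed.

(** * The one-sided reflection Gamma_0 *)

Section Gamma0.
Variable psi : R -> R.
Hypothesis psi_D : is_D psi.

Definition Lreg : R -> R := run_sup (fun s => posp (- psi s)).

Lemma neg_part_D : is_D (fun s => posp (- psi s)).
Proof.
  apply (is_D_comp_lip (fun x => posp (- x))); [| exact psi_D].
  intros x y. eapply Rle_trans; [apply posp_lip |].
  replace (- x - - y) with (- (x - y)) by ring. rewrite Rabs_Ropp. lra.
Qed.

Lemma Gamma0_eq t : Gamma0 psi t = psi t + Lreg t.
Proof. reflexivity. Qed.

Lemma Lreg_D : is_D Lreg.
Proof. exact (run_sup_D _ neg_part_D). Qed.

Lemma Lreg_mono s t : 0 <= s <= t -> Lreg s <= Lreg t.
Proof. exact (run_sup_mono _ neg_part_D s t). Qed.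

Lemma Lreg_nonneg t : 0 <= t -> 0 <= Lreg t.
Proof.
  intros Ht. eapply Rle_trans; [apply (posp_ge0 (- psi t)) |]. apply (run_sup_ge _ neg_part_D); lra.
Qed.

Lemma Lreg_zero : Lreg 0 = posp (- psi 0).
Proof.
  apply Rle_antisym.
  - apply run_sup_le; [lra |]. intros s Hs. replace s with 0 by lra. lra.
  - apply (run_sup_ge _ neg_part_D); lra.
Qed.

Lemma Gamma0_nonneg t : 0 <= t -> 0 <= Gamma0 psi t.
Proof.
  intros Ht. pose proof (run_sup_ge _ neg_part_D t t ltac:(lra)). pose proof (posp_ge (- psi t)).
  rewrite Gamma0_eq. unfold Lreg. lra.
Qed.

Lemma Gamma0_D : is_D (Gamma0 psi).
Proof. exact (is_D_plus psi Lreg psi_D Lreg_D). Qed.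

Lemma Lreg_flat u v c : 0 <= u <= v -> 0 < c -> (forall x, u <= x <= v -> c <= Gamma0 psi x) ->
  Lreg v = Lreg u.
Proof.
  intros Huv Hc Hpos. apply (run_sup_flat _ neg_part_D u v c Huv Hc (Lreg_nonneg u ltac:(lra))).
  intros x Hx. specialize (Hpos x Hx). rewrite Gamma0_eq in Hpos.
  apply posp_le. unfold Lreg in *. lra.
Qed.

Lemma Lreg_nojump t l : 0 < t -> is_left_lim Lreg t l -> 0 < Gamma0 psi t -> Lreg t = l.
Proof.
  intros Ht Hl Hpos. destruct (run_sup_jump _ neg_part_D t l Ht Hl) as [Hlo Hhi].
  assert (Hl0 : 0 <= l).
  { apply (left_lim_ge Lreg t l 0 t Hl Ht). intros s Hs. apply Lreg_nonneg. lra. }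
  rewrite Gamma0_eq in Hpos. unfold Lreg in *.
  unfold Rmax in Hhi. destruct (Rle_dec l (posp (- psi t))); [| lra].
  unfold posp, Rmax in *. destruct (Rle_dec (- psi t) 0); lra.
Qed.

End Gamma0.

(** * The upper regulator of Lambda_a *)

Section UpperRegulator.
Variable a : R.
Hypothesis a_pos : 0 < a.
Variable phi : R -> R.
Hypothesis phi_D : is_D phi.
Hypothesis phi_nonneg : forall t, 0 <= t -> 0 <= phi t.

Definition lowest (s t : R) : R := inf_on phi s t.
Definition excess (s : R) : R := posp (phi s - a).
Definition kterm (s t : R) : R := Rmin (excess s) (lowest s t).
Definition Kreg (t : R) : R := sup_on (fun s => kterm s t) 0 t.

Lemma lowest_le s x t : 0 <= s <= x -> x <= t -> lowest s t <= phi x.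
Proof. intros. apply (inf_on_le phi s t 0); [intros; apply phi_nonneg; lra | lra]. Qed.

Lemma lowest_ge s t c : s <= t -> (forall x, s <= x <= t -> c <= phi x) -> c <= lowest s t.
Proof. intros. now apply inf_on_ge. Qed.

Lemma lowest_nonneg s t : 0 <= s <= t -> 0 <= lowest s t.
Proof. intros. apply lowest_ge; [lra |]. intros. apply phi_nonneg. lra. Qed.

Lemma excess_le_phi s : 0 <= s -> excess s <= phi s.
Proof. intros. apply posp_lub; [lra | now apply phi_nonneg]. Qed.

Lemma excess_lip s x : excess s <= excess x + Rabs (phi s - phi x).
Proof.
  pose proof (posp_lip (phi s - a) (phi x - a)) as Hlip.
  replace (phi s - a - (phi x - a)) with (phi s - phi x) in Hlip by ring.
  pose proof (RRle_abs (posp (phi s - a) - posp (phi x - a))). unfold excess. lra.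
Qed.

Lemma kterm_shrink s x t : 0 <= s <= x -> x <= t -> kterm s t <= kterm s x.
Proof.
  intros. assert (lowest s t <= lowest s x).
  { apply lowest_ge; [lra |]. intros. apply lowest_le; lra. }
  unfold kterm, Rmin. destruct (Rle_dec (excess s) (lowest s t)), (Rle_dec (excess s) (lowest s x)); lra.
Qed.

Lemma kterm_le s t : 0 <= s <= t -> kterm s t <= phi t.
Proof. intros. eapply Rle_trans; [apply Rmin_r | apply lowest_le; lra]. Qed.

Lemma kterm_nonneg s t : 0 <= s <= t -> 0 <= kterm s t.
Proof. intros. apply Rmin_glb; [apply posp_ge0 | now apply lowest_nonneg]. Qed.

Lemma Kreg_ge s t : 0 <= s <= t -> kterm s t <= Kreg t.
Proof.
  intros. apply (sup_on_ge (fun s => kterm s t) 0 t (phi t)); [| exact H].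
  intros; apply kterm_le; lra.
Qed.

Lemma Kreg_le t M : 0 <= t -> (forall s, 0 <= s <= t -> kterm s t <= M) -> Kreg t <= M.
Proof. intros. now apply (sup_on_le (fun s => kterm s t)). Qed.

Lemma Kreg_approx t eps : 0 <= t -> 0 < eps -> exists s, 0 <= s <= t /\ Kreg t - eps < kterm s t.
Proof.
  intros. apply (sup_on_approx (fun s => kterm s t) 0 t (phi t)); auto.
  intros; apply kterm_le; lra.
Qed.

Lemma Kreg_nonneg t : 0 <= t -> 0 <= Kreg t.
Proof. intros. eapply Rle_trans; [apply (kterm_nonneg t t); lra | apply Kreg_ge; lra]. Qed.

Lemma Kreg_le_phi t : 0 <= t -> Kreg t <= phi t.
Proof. intros. apply Kreg_le; [exact H |]. intros. apply kterm_le. lra. Qed.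

Lemma Kreg_ge_excess t : 0 <= t -> excess t <= Kreg t.
Proof.
  intros. eapply Rle_trans; [| apply (Kreg_ge t t); lra]. apply Rmin_glb; [lra |].
  apply lowest_ge; [lra |]. intros x Hx. replace x with t by lra. now apply excess_le_phi.
Qed.

Lemma Kreg_zero : Kreg 0 = excess 0.
Proof.
  apply Rle_antisym; [| apply Kreg_ge_excess; lra].
  apply Kreg_le; [lra |]. intros s Hs. replace s with 0 by lra. apply Rmin_l.
Qed.

Lemma Kreg_lower x t c : 0 <= x <= t -> (forall u, x <= u <= t -> c <= phi u) ->
  Rmin (Kreg x) c <= Kreg t.
Proof.
  intros Hx Hc. apply Rnot_lt_le. intros Hlt.
  set (gap := Rmin (Kreg x) c - Kreg t).
  destruct (Kreg_approx x gap) as [s [Hs Hs']]; [lra | unfold gap; lra |].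
  assert (Hm : Rmin (lowest s x) c <= lowest s t).
  { apply lowest_ge; [lra |]. intros u Hu. destruct (Rle_dec u x).
    - eapply Rle_trans; [apply Rmin_l | apply lowest_le; lra].
    - eapply Rle_trans; [apply Rmin_r | apply Hc; lra]. }
  pose proof (Kreg_ge s t ltac:(lra)).
  assert (Rmin (kterm s x) c <= kterm s t).
  { unfold kterm, Rmin in *.
    destruct (Rle_dec (excess s) (lowest s x)), (Rle_dec (excess s) (lowest s t)),
      (Rle_dec (lowest s x) c), (Rle_dec (excess s) c); lra. }
  pose proof (Rmin_l (Kreg x) c). pose proof (Rmin_r (Kreg x) c).
  unfold gap in Hs'. unfold Rmin at 1 in H0. destruct (Rle_dec (kterm s x) c); lra.
Qed.

Lemma Kreg_upper x t M : 0 <= x <= t -> Kreg x <= M -> (forall s, x < s <= t -> excess s <= M) ->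
  Kreg t <= M.
Proof.
  intros Hx HK Hexc. apply Kreg_le; [lra |]. intros s Hs. destruct (Rle_dec s x).
  - eapply Rle_trans; [apply (kterm_shrink s x t); lra |].
    eapply Rle_trans; [apply Kreg_ge; lra | exact HK].
  - eapply Rle_trans; [apply Rmin_l | apply Hexc; lra].
Qed.

(** K is cadlag: the two basic estimates control it near any time. *)
Lemma Kreg_rc t : 0 <= t -> right_cont Kreg t.
Proof.
  intros Ht eps He. destruct (phi_D t Ht) as [Hr _].
  destruct (Hr (eps / 2)) as [d [Hd Hd']]; [lra |].
  exists d. split; [exact Hd |]. intros s Hs.
  assert (Rmin (Kreg t) (phi t - eps / 2) <= Kreg s).
  { apply Kreg_lower; [lra |]. intros u Hu. destruct (Req_dec u t) as [-> | E]; [lra |].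
    specialize (Hd' u ltac:(lra)). apply Rabs_def2 in Hd'. lra. }
  assert (Kreg s <= Kreg t + eps / 2).
  { apply (Kreg_upper t); [lra | lra |]. intros u Hu. specialize (Hd' u ltac:(lra)).
    pose proof (excess_lip u t). pose proof (Kreg_ge_excess t Ht). lra. }
  pose proof (Kreg_le_phi t Ht).
  unfold Rmin in H. destruct (Rle_dec (Kreg t) (phi t - eps / 2)); apply Rabs_def1; lra.
Qed.

Lemma Kreg_lc t : 0 < t -> left_cauchy Kreg t.
Proof.
  intros Ht eps He. destruct (phi_D t ltac:(lra)) as [_ Hl]. destruct (Hl Ht) as [l Hll].
  destruct (Hll (eps / 4)) as [d [Hd Hd']]; [lra |].
  exists (Rmin d t). split; [apply Rmin_glb_lt; lra |].
  pose proof (Rmin_l d t). pose proof (Rmin_r d t).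
  assert (Hnear : forall x y, t - Rmin d t < y <= x -> x < t ->
            Kreg y - eps / 2 <= Kreg x <= Kreg y + eps / 2).
  { intros x y Hy Hx. pose proof (Hd' y ltac:(lra)) as Hy'. apply Rabs_def2 in Hy'. split.
    - assert (Rmin (Kreg y) (l - eps / 4) <= Kreg x).
      { apply Kreg_lower; [lra |]. intros u Hu. specialize (Hd' u ltac:(lra)). apply Rabs_def2 in Hd'. lra. }
      pose proof (Kreg_le_phi y ltac:(lra)).
      unfold Rmin in H1. destruct (Rle_dec (Kreg y) (l - eps / 4)); lra.
    - apply (Kreg_upper y); [lra | lra |]. intros u Hu.
      pose proof (excess_lip u y). pose proof (Kreg_ge_excess y ltac:(lra)).
      pose proof (Hd' u ltac:(lra)) as Hu'. apply Rabs_def2 in Hu'.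
      assert (Rabs (phi u - phi y) <= eps / 2) by (apply Rabs_le; lra). lra. }
  intros x y Hx Hy. destruct (Rle_dec y x).
  - pose proof (Hnear x y ltac:(lra) ltac:(lra)). apply Rabs_def1; lra.
  - pose proof (Hnear y x ltac:(lra) ltac:(lra)). apply Rabs_def1; lra.
Qed.

Lemma Kreg_D : is_D Kreg.
Proof. apply cadlag_of_cauchy; [exact Kreg_rc | exact Kreg_lc]. Qed.

Lemma Kreg_jump_lo t lK lphi : 0 < t -> is_left_lim Kreg t lK -> is_left_lim phi t lphi ->
  Rmin lK (phi t) <= Kreg t.
Proof.
  intros Ht HK Hp.
  assert (HlKp : lK <= lphi).
  { assert (0 <= lphi - lK); [| lra].
    apply (left_lim_ge _ t _ 0 t (left_lim_minus phi Kreg t lphi lK Hp HK) Ht).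
    intros s Hs. pose proof (Kreg_le_phi s ltac:(lra)). lra. }
  apply Rnot_lt_le. intros Hlt. set (gap := Rmin lK (phi t) - Kreg t).
  pose proof (Rmin_l lK (phi t)). pose proof (Rmin_r lK (phi t)).
  destruct (HK (gap / 2)) as [d1 [Hd1 H1]]; [unfold gap; lra |].
  destruct (Hp (gap / 2)) as [d2 [Hd2 H2]]; [unfold gap; lra |].
  set (w := Rmin (Rmin d1 d2) t).
  assert (0 < w) by (unfold w; repeat apply Rmin_glb_lt; lra).
  assert (w <= d1 /\ w <= d2 /\ w <= t) as [Hw1 [Hw2 Hw3]].
  { unfold w. pose proof (Rmin_l (Rmin d1 d2) t). pose proof (Rmin_r (Rmin d1 d2) t).
    pose proof (Rmin_l d1 d2). pose proof (Rmin_r d1 d2). lra. }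
  set (x := t - w / 2).
  assert (Hlow : Rmin (Kreg x) (Rmin (lphi - gap / 2) (phi t)) <= Kreg t).
  { apply Kreg_lower; [unfold x; lra |]. intros u Hu. destruct (Req_dec u t) as [-> | E]; [apply Rmin_r |].
    eapply Rle_trans; [apply Rmin_l |].
    specialize (H2 u ltac:(unfold x in *; lra)). apply Rabs_def2 in H2. lra. }
  specialize (H1 x ltac:(unfold x; lra)). apply Rabs_def2 in H1.
  assert (Kreg t < Rmin (Kreg x) (Rmin (lphi - gap / 2) (phi t))).
  { apply Rmin_glb_lt; [unfold gap in *; lra |]. apply Rmin_glb_lt; unfold gap in *; lra. }
  lra.
Qed.

Lemma Kreg_jump_hi t lK : 0 < t -> is_left_lim Kreg t lK -> Kreg t <= Rmax lK (excess t).
Proof.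
  intros Ht HK. apply Kreg_le; [lra |]. intros s Hs. destruct (Req_dec s t) as [-> | E].
  - eapply Rle_trans; [apply Rmin_l | apply Rmax_r].
  - eapply Rle_trans; [| apply Rmax_l].
    apply (left_lim_ge Kreg t lK _ (t - s) HK ltac:(lra)). intros x Hx.
    eapply Rle_trans; [apply (kterm_shrink s x t); lra | apply Kreg_ge; lra].
Qed.

Lemma Kreg_left_lim_nonneg t lK : 0 < t -> is_left_lim Kreg t lK -> 0 <= lK.
Proof.
  intros Ht HK. apply (left_lim_ge Kreg t lK 0 t HK Ht). intros s Hs. apply Kreg_nonneg. lra.
Qed.

Lemma Kreg_up u v c : 0 <= u <= v -> 0 < c -> (forall x, u <= x <= v -> c <= phi x - Kreg x) ->
  forall x, u <= x <= v -> Kreg u <= Kreg x.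
Proof.
  intros Huv Hc Hb.
  apply (inf_bootstrap Kreg u v c (Kreg u)); [lra | exact Hc | |].
  - exists 0. intros. apply Kreg_nonneg. lra.
  - intros m Hm x Hx. apply Kreg_lower; [lra |]. intros w Hw.
    specialize (Hm w ltac:(lra)). specialize (Hb w ltac:(lra)). lra.
Qed.

Lemma Kreg_down u v c : 0 <= u <= v -> 0 < c -> (forall x, u <= x <= v -> phi x - Kreg x <= a - c) ->
  forall x, u <= x <= v -> Kreg x <= Kreg u.
Proof.
  intros Huv Hc Hb.
  destruct (D_bounded phi v phi_D ltac:(lra)) as [B HB].
  apply (sup_bootstrap Kreg u v c (Kreg u)); [lra | exact Hc | apply Kreg_nonneg; lra | |].
  - exists B. intros x Hx. pose proof (Kreg_le_phi x ltac:(lra)). specialize (HB x ltac:(lra)).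
    pose proof (RRle_abs (phi x)). lra.
  - intros M HM x Hx. apply (Kreg_upper u); [lra | apply Rmax_l |].
    intros s Hs. eapply Rle_trans; [| apply Rmax_r]. apply posp_le.
    specialize (Hb s ltac:(lra)). specialize (HM s ltac:(lra)). lra.
Qed.

End UpperRegulator.

Section Candidate.
Variable a : R.
Hypothesis a_pos : 0 < a.
Variable psi : R -> R.
Hypothesis psi_D : is_D psi.

Local Notation phi := (Gamma0 psi).
Local Notation K := (Kreg a phi).

Definition phibar : R -> R := Lambda a phi.
Definition etabar (t : R) : R := phibar t - psi t.

(** phibar = phi - K inherits cadlag paths; 0 <= phibar <= a since excess <= K <= phi. *)
Lemma phi_nonneg t : 0 <= t -> 0 <= phi t.
Proof. exact (Gamma0_nonneg psi psi_D t). Qed.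

Lemma phibar_eq t : phibar t = phi t - K t.
Proof. reflexivity. Qed.

Lemma etabar_eq t : etabar t = Lreg psi t - K t.
Proof. unfold etabar. rewrite phibar_eq. rewrite Gamma0_eq. ring. Qed.

Lemma K_D : is_D K.
Proof. exact (Kreg_D a a_pos phi (Gamma0_D psi psi_D) phi_nonneg). Qed.

Lemma K_nonneg t : 0 <= t -> 0 <= K t.
Proof. exact (Kreg_nonneg a phi phi_nonneg t). Qed.

Lemma phibar_D : is_D phibar.
Proof. exact (is_D_minus phi K (Gamma0_D psi psi_D) K_D). Qed.

Lemma etabar_D : is_D etabar.
Proof. exact (is_D_minus phibar psi phibar_D psi_D). Qed.

Lemma phibar_range t : 0 <= t -> 0 <= phibar t <= a.
Proof.
  intros Ht. rewrite phibar_eq. pose proof (Kreg_le_phi a phi phi_nonneg t Ht).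
  pose proof (Kreg_ge_excess a a_pos phi phi_nonneg t Ht).
  pose proof (posp_ge (phi t - a)). unfold excess in *. lra.
Qed.

Lemma etabar_down y z c : 0 <= y <= z -> 0 < c -> (forall x, y <= x <= z -> c <= phibar x) ->
  etabar z <= etabar y.
Proof.
  intros Hyz Hc Hb. rewrite !etabar_eq.
  assert (Lreg psi z = Lreg psi y).
  { apply (Lreg_flat psi psi_D y z c Hyz Hc). intros x Hx.
    specialize (Hb x Hx). rewrite phibar_eq in Hb. pose proof (K_nonneg x ltac:(lra)).
    lra. }
  assert (K y <= K z).
  { apply (Kreg_up a phi phi_nonneg y z c Hyz Hc); [| lra]. intros x Hx.
    exact (Hb x Hx). }
  lra.
Qed.

Lemma etabar_up y z c : 0 <= y <= z -> 0 < c -> (forall x, y <= x <= z -> phibar x <= a - c) ->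
  etabar y <= etabar z.
Proof.
  intros Hyz Hc Hb. rewrite !etabar_eq.
  pose proof (Lreg_mono psi psi_D y z Hyz).
  assert (K z <= K y).
  { apply (Kreg_down a phi (Gamma0_D psi psi_D) phi_nonneg y z c Hyz Hc); [| lra].
    intros x Hx. exact (Hb x Hx). }
  lra.
Qed.

Lemma etabar_monotone (P : R -> Prop) c :
  (forall x, P x -> 0 <= x) -> (forall x y z, P x -> P z -> x <= y <= z -> P y) ->
  (forall x, P x -> Rabs (phibar x - c) < a / 3) -> monotone_on etabar P.
Proof.
  intros Hnn Hconv Hosc. unfold monotone_on. destruct (Rle_dec (a / 2) c); [left | right];
    intros y z Hy Hz Hyz; pose proof (Hnn y Hy).
  - apply (etabar_down y z (a / 6)); [lra | lra |]. intros x Hx.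
    specialize (Hosc x (Hconv y x z Hy Hz Hx)). apply Rabs_def2 in Hosc. lra.
  - apply (etabar_up y z (a / 6)); [lra | lra |]. intros x Hx.
    specialize (Hosc x (Hconv y x z Hy Hz Hx)). apply Rabs_def2 in Hosc. lra.
Qed.

Lemma etabar_left_lim t : 0 < t -> exists lL lK,
  is_left_lim (Lreg psi) t lL /\ is_left_lim K t lK /\ is_left_lim etabar t (lL - lK).
Proof.
  intros Ht. destruct (Lreg_D psi psi_D t ltac:(lra)) as [_ HL]. destruct (HL Ht) as [lL HlL].
  destruct (K_D t ltac:(lra)) as [_ HK]. destruct (HK Ht) as [lK HlK].
  exists lL, lK. split; [exact HlL |]. split; [exact HlK |].
  intros eps He. destruct (left_lim_minus _ _ t lL lK HlL HlK eps He) as [d [Hd Hd']].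
  exists d. split; [exact Hd |]. intros s Hs. rewrite etabar_eq. exact (Hd' s Hs).
Qed.

Lemma etabar_jump_pos t le : 0 < t -> is_left_lim etabar t le -> 0 < phibar t -> etabar t <= le.
Proof.
  intros Ht Hle Hp. destruct (etabar_left_lim t Ht) as [lL [lK [HlL [HlK He]]]].
  rewrite (left_lim_unique etabar t le (lL - lK) Hle He).
  rewrite phibar_eq in Hp. pose proof (K_nonneg t ltac:(lra)).
  assert (Lreg psi t = lL) by (apply (Lreg_nojump psi psi_D t lL Ht HlL); lra).
  destruct (Gamma0_D psi psi_D t ltac:(lra)) as [_ Hphil]. destruct (Hphil Ht) as [lphi Hlphi].
  pose proof (Kreg_jump_lo a phi phi_nonneg t lK lphi Ht HlK Hlphi).
  rewrite etabar_eq. unfold Rmin in H1. destruct (Rle_dec lK (phi t)); lra.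
Qed.

Lemma etabar_jump_lt t le : 0 < t -> is_left_lim etabar t le -> phibar t < a -> le <= etabar t.
Proof.
  intros Ht Hle Hp. destruct (etabar_left_lim t Ht) as [lL [lK [HlL [HlK He]]]].
  rewrite (left_lim_unique etabar t le (lL - lK) Hle He).
  destruct (run_sup_jump _ (neg_part_D psi psi_D) t lL Ht HlL) as [HL _].
  pose proof (Kreg_jump_hi a phi phi_nonneg t lK Ht HlK) as HKhi.
  pose proof (Kreg_left_lim_nonneg a phi phi_nonneg t lK Ht HlK).
  pose proof (Kreg_ge_excess a a_pos phi phi_nonneg t ltac:(lra)).
  rewrite phibar_eq in Hp. rewrite etabar_eq. unfold Lreg in *.
  unfold Rmax in HKhi. destruct (Rle_dec lK (excess a phi t)); [| lra].
  unfold excess, posp, Rmax in *. destruct (Rle_dec (phi t - a) 0); lra.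
Qed.

(** The same dichotomy for the initial jump from etabar(0-) = 0. *)
Lemma etabar_zero_pos : 0 < phibar 0 -> etabar 0 <= 0.
Proof.
  intros Hp. rewrite etabar_eq, (Lreg_zero psi psi_D). rewrite (Kreg_zero a a_pos phi phi_nonneg).
  rewrite phibar_eq in Hp. rewrite (Kreg_zero a a_pos phi phi_nonneg) in Hp.
  unfold excess in *. rewrite Gamma0_eq, (Lreg_zero psi psi_D) in *.
  unfold posp, Rmax in *. repeat destruct (Rle_dec _ _); lra.
Qed.

Lemma etabar_zero_lt : phibar 0 < a -> 0 <= etabar 0.
Proof.
  intros Hp. rewrite etabar_eq, (Lreg_zero psi psi_D). rewrite (Kreg_zero a a_pos phi phi_nonneg).
  rewrite phibar_eq in Hp. rewrite (Kreg_zero a a_pos phi phi_nonneg) in Hp.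
  unfold excess, posp, Rmax in *. repeat destruct (Rle_dec _ _); lra.
Qed.

End Candidate.

(** * Existence: (phibar, etabar) solves the Skorokhod problem *)

Lemma var_sum_le_diff (f l u : R -> R) T :
  (forall t, 0 <= t -> f t = l t - u t) ->
  (forall s t, 0 <= s <= t -> l s <= l t) -> (forall s t, 0 <= s <= t -> u s <= u t) ->
  forall (n : nat) (x : nat -> R), 0 <= x O -> (forall i, (i < n)%nat -> x i <= x (S i)) ->
    x n <= T -> var_sum f x n <= (l T - l 0) + (u T - u 0).
Proof.
  intros Hf Hl Hu n x H0 Hinc HT.
  assert (Hge : forall k, (k <= n)%nat -> x O <= x k).
  { induction k; intros Hk; [lra |]. specialize (IHk ltac:(lia)). specialize (Hinc k ltac:(lia)). lra. }
  assert (Hk : forall k, (k <= n)%nat ->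
            var_sum f x k <= (l (x k) - l (x O)) + (u (x k) - u (x O))).
  { induction k; intros Hk; simpl; [lra |].
    specialize (IHk ltac:(lia)). specialize (Hinc k ltac:(lia)). pose proof (Hge k ltac:(lia)).
    pose proof (Hl (x k) (x (S k)) ltac:(lra)). pose proof (Hu (x k) (x (S k)) ltac:(lra)).
    rewrite (Hf (x (S k))), (Hf (x k)) by lra.
    unfold Rabs. destruct (Rcase_abs _); lra. }
  specialize (Hk n (le_n n)). pose proof (Hge n (le_n n)).
  pose proof (Hl (x n) T ltac:(lra)). pose proof (Hu (x n) T ltac:(lra)).
  pose proof (Hl 0 (x O) ltac:(lra)). pose proof (Hu 0 (x O) ltac:(lra)). lra.
Qed.

Section Existence.
Variable a : R.
Hypothesis a_pos : 0 < a.
Variable psi : R -> R.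
Hypothesis psi_D : is_D psi.

Local Notation phibar := (phibar a psi).
Local Notation etabar := (etabar a psi).

Lemma etabar_right_monotone t : 0 <= t ->
  exists d, 0 < d /\ monotone_on etabar (fun x => t <= x < t + d).
Proof.
  intros Ht. destruct (phibar_D a a_pos psi psi_D t Ht) as [Hr _].
  destruct (Hr (a / 3)) as [d [Hd Hd']]; [lra |]. exists d. split; [exact Hd |].
  apply (etabar_monotone a a_pos psi psi_D _ (phibar t)); [intros; lra | intros; lra | exact Hd'].
Qed.

Lemma etabar_left_monotone t : 0 < t ->
  exists d, 0 < d <= t /\ monotone_on etabar (fun x => t - d < x < t).
Proof.
  intros Ht. destruct (phibar_D a a_pos psi psi_D t ltac:(lra)) as [_ Hl].
  destruct (Hl Ht) as [l Hll]. destruct (Hll (a / 3)) as [d [Hd Hd']]; [lra |].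
  exists (Rmin d t). pose proof (Rmin_l d t). pose proof (Rmin_r d t).
  split; [split; [apply Rmin_glb_lt |]; lra |].
  apply (etabar_monotone a a_pos psi psi_D _ l); [intros; lra | intros; lra |].
  intros x Hx. apply Hd'. lra.
Qed.

(** etabar has finite positive variation: it is monotone on each piece of a
    partition of [0,T] on which phibar oscillates by less than a/3. *)
Lemma etabar_posvar_finite T : 0 <= T -> posvar_finite etabar T.
Proof.
  intros HT.
  destruct (osc_exists phibar (a / 3) T (phibar_D a a_pos psi psi_D) ltac:(lra) HT) as [m [t Hp]].
  destruct (D_bounded etabar T (etabar_D a a_pos psi psi_D) HT) as [B HB].
  pose proof (osc_mono _ _ _ _ _ Hp) as Hmono. pose proof (osc_piece_nonneg _ _ _ _ _ Hp) as Hnn.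
  destruct Hp as [H0 [Hm [_ Hosc]]].
  assert (Hpieces : forall k, (k <= m)%nat -> posvar_finite etabar (t k)).
  { induction k as [| k IHk]; intros Hk; [rewrite H0; apply posvar_finite_zero |].
    specialize (IHk ltac:(lia)). specialize (Hnn k ltac:(lia)).
    pose proof (Hmono (S k) m ltac:(lia)).
    assert (HBk : forall x, t k <= x < t (S k) -> - B <= etabar x <= B).
    { intros x Hx. pose proof (Hmono O k ltac:(lia)). specialize (HB x ltac:(lra)).
      unfold Rabs in HB. destruct (Rcase_abs (etabar x)); lra. }
    assert (Hmon : monotone_on etabar (fun x => t k <= x < t (S k))).
    { apply (etabar_monotone a a_pos psi psi_D _ (phibar (t k))); [intros; lra | intros; lra |].
      intros x Hx. apply (Hosc k ltac:(lia)); lra. }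
    destruct Hmon as [Hdn | Hup].
    - apply (posvar_piece_dn etabar (t k) (t (S k)) (- B) Hnn IHk Hdn). intros x Hx. apply HBk, Hx.
    - apply (posvar_piece_up etabar (t k) (t (S k)) B Hnn IHk Hup). intros x Hx. apply HBk, Hx. }
  rewrite <- Hm. apply Hpieces. lia.
Qed.

Definition eta_l (t : R) : R := posvar etabar t.
Definition eta_u (t : R) : R := posvar etabar t - etabar t.

Lemma eta_l_D : is_D eta_l.
Proof.
  apply cadlag_of_cauchy.
  - intros t Ht. apply posvar_rc; [exact Ht | apply (etabar_D a a_pos psi psi_D t Ht) |
      now apply etabar_posvar_finite | now apply etabar_right_monotone].
  - intros t Ht. destruct (etabar_D a a_pos psi psi_D t ltac:(lra)) as [_ Hl].
    destruct (Hl Ht) as [l Hll].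
    apply (posvar_lc etabar t l Ht Hll); [apply etabar_posvar_finite; lra | now apply etabar_left_monotone].
Qed.

Lemma eta_u_D : is_D eta_u.
Proof. exact (is_D_minus eta_l etabar eta_l_D (etabar_D a a_pos psi psi_D)). Qed.

Lemma eta_l_I : is_I eta_l.
Proof.
  split; [exact eta_l_D |]. intros s t Hst. apply posvar_mono; [exact Hst |].
  apply etabar_posvar_finite. lra.
Qed.

Lemma eta_u_I : is_I eta_u.
Proof.
  split; [exact eta_u_D |]. intros s t Hst. unfold eta_u.
  pose proof (posvar_super etabar s t Hst (etabar_posvar_finite t ltac:(lra))).
  pose proof (posp_ge (etabar t - etabar s)). lra.
Qed.

Lemma eta_l_0 : 0 <= eta_l 0.
Proof. unfold eta_l. rewrite posvar_zero. apply posp_ge0. Qed.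

Lemma eta_u_0 : 0 <= eta_u 0.
Proof. unfold eta_u. rewrite posvar_zero. pose proof (posp_ge (etabar 0)). lra. Qed.

Lemma eta_l_LS_null : LS_null eta_l (fun s => 0 <= s /\ phibar s > 0).
Proof.
  apply (LS_null_positive_set eta_l phibar (phibar_D a a_pos psi psi_D)).
  - intros Hp. unfold eta_l. rewrite posvar_zero. apply posp_neg.
    exact (etabar_zero_pos a a_pos psi psi_D Hp).
  - intros u be c Hube Hc Hlow. unfold eta_l.
    apply (posvar_on_dn etabar u be Hube (etabar_posvar_finite u ltac:(lra))).
    intros y z Hy Hz Hyz. apply (etabar_down a psi psi_D y z c); [lra | exact Hc |].
    intros x Hx. apply Hlow. lra.
  - intros t Ht Hp dl Hdl.
    destruct (etabar_D a a_pos psi psi_D t ltac:(lra)) as [_ Hl]. destruct (Hl Ht) as [le Hle].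
    destruct (posvar_left_jump etabar t le Ht Hle (etabar_posvar_finite t ltac:(lra))
                (etabar_left_monotone t Ht) dl Hdl) as [y [Hy [Hjump _]]].
    exists y. split; [exact Hy |]. unfold eta_l.
    rewrite posp_neg in Hjump; [lra |].
    pose proof (etabar_jump_pos a a_pos psi psi_D t le Ht Hle Hp). lra.
Qed.

Lemma eta_u_LS_null : LS_null eta_u (fun s => 0 <= s /\ phibar s < a).
Proof.
  apply (LS_null_sub eta_u (fun s => 0 <= s /\ a - phibar s > 0)); [intros s Hs; lra |].
  apply (LS_null_positive_set eta_u (fun s => a - phibar s)
           (is_D_minus _ _ (is_D_const a) (phibar_D a a_pos psi psi_D))).
  - intros Hp. unfold eta_u. rewrite posvar_zero. rewrite posp_pos; [ring |].
    apply (etabar_zero_lt a a_pos psi psi_D). lra.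
  - intros u be c Hube Hc Hlow. unfold eta_u.
    destruct (posvar_on_up etabar u be Hube (etabar_posvar_finite u ltac:(lra))) as [_ E];
      [| rewrite E; ring].
    intros y z Hy Hz Hyz. apply (etabar_up a psi psi_D y z c); [lra | exact Hc |].
    intros x Hx. specialize (Hlow x ltac:(lra)). lra.
  - intros t Ht Hp dl Hdl.
    destruct (etabar_D a a_pos psi psi_D t ltac:(lra)) as [_ Hl]. destruct (Hl Ht) as [le Hle].
    destruct (posvar_left_jump etabar t le Ht Hle (etabar_posvar_finite t ltac:(lra))
                (etabar_left_monotone t Ht) dl Hdl) as [y [Hy [_ Hjump]]].
    exists y. split; [exact Hy |]. unfold eta_u.
    rewrite posp_neg in Hjump; [lra |].
    pose proof (etabar_jump_lt a a_pos psi psi_D t le Ht Hle ltac:(lra)). lra.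
Qed.

Lemma etabar_BV : is_BV etabar.
Proof.
  split; [exact (etabar_D a a_pos psi psi_D) |]. intros T HT.
  exists ((eta_l T - eta_l 0) + (eta_u T - eta_u 0)).
  apply (var_sum_le_diff etabar eta_l eta_u T).
  - intros t _. unfold eta_u, eta_l. ring.
  - exact (proj2 eta_l_I).
  - exact (proj2 eta_u_I).
Qed.

Theorem existence : Skorokhod_sol a psi phibar etabar.
Proof.
  split; [| split; [| split]].
  - exact (phibar_D a a_pos psi psi_D).
  - exact etabar_BV.
  - intros t Ht. split; [unfold etabar; ring | exact (phibar_range a a_pos psi psi_D t Ht)].
  - exists eta_l, eta_u.
    split; [exact eta_l_I | split; [exact eta_u_I |]].
    split; [exact eta_l_0 | split; [exact eta_u_0 |]].
    split; [intros t Ht; unfold eta_u, eta_l; ring |].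
    split; [exact eta_l_LS_null | exact eta_u_LS_null].
Qed.

End Existence.

Section IntervalMass.
Variable F : R -> R.
Hypothesis F_I : is_I F.

Lemma F_mono s t : 0 <= s <= t -> F s <= F t.
Proof. exact (proj2 F_I s t). Qed.

Definition clip (lo q x : R) : R := Rmax lo (Rmin q x).

Lemma clip_self lo q : clip lo q lo = lo.
Proof. apply Rmax_left. apply Rmin_r. Qed.

Lemma clip_mass_mono lo p q y x : 0 <= lo -> p <= q -> lo <= y <= x ->
  F (clip lo q y) - F (clip lo p y) <= F (clip lo q x) - F (clip lo p x).
Proof.
  intros Hlo Hpq Hyx. unfold clip.
  destruct (Rle_dec q lo).
  - rewrite !(Rmax_left lo); try (apply Rle_trans with q; [apply Rmin_l | lra]);
      try (apply Rle_trans with p; [apply Rmin_l | lra]). lra.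
  - destruct (Rle_dec p lo).
    + rewrite (Rmax_left lo (Rmin p y)), (Rmax_left lo (Rmin p x))
        by (apply Rle_trans with p; [apply Rmin_l | lra]).
      assert (F (Rmax lo (Rmin q y)) <= F (Rmax lo (Rmin q x))); [| lra].
      apply F_mono. split; [eapply Rle_trans; [exact Hlo | apply Rmax_l] |].
      unfold Rmax, Rmin. repeat destruct (Rle_dec _ _); lra.
    + destruct (Rle_dec x p).
      * rewrite (Rmin_right p x), (Rmin_right p y), (Rmin_right q x), (Rmin_right q y) by lra. lra.
      * destruct (Rle_dec y p).
        -- rewrite (Rmin_right p y), (Rmin_right q y), (Rmin_left p x) by lra.
           rewrite (Rmax_right lo p), (Rmax_right lo y) by lra.
           assert (F p <= F (Rmax lo (Rmin q x))); [| lra].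
           apply F_mono. split; [lra |]. unfold Rmax, Rmin. repeat destruct (Rle_dec _ _); lra.
        -- rewrite (Rmin_left p y), (Rmin_left p x) by lra.
           assert (F (Rmax lo (Rmin q y)) <= F (Rmax lo (Rmin q x))); [| lra].
           apply F_mono. split; [eapply Rle_trans; [exact Hlo | apply Rmax_l] |].
           unfold Rmax, Rmin. repeat destruct (Rle_dec _ _); lra.
Qed.

Lemma clip_mass_le lo p q x : 0 <= lo -> 0 <= p <= q -> lo <= x ->
  F (clip lo q x) - F (clip lo p x) <= F q - F p.
Proof.
  intros Hlo Hpq Hx. unfold clip.
  destruct (Rle_dec q lo).
  - rewrite (Rmax_left lo (Rmin q x)) by (apply Rle_trans with q; [apply Rmin_l | lra]).
    rewrite (Rmax_left lo (Rmin p x)) by (apply Rle_trans with p; [apply Rmin_l | lra]).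
    pose proof (F_mono p q Hpq). lra.
  - destruct (Rle_dec p x).
    + assert (F (Rmax lo (Rmin q x)) <= F q).
      { apply F_mono. split; [eapply Rle_trans; [exact Hlo | apply Rmax_l] |].
        unfold Rmax, Rmin. repeat destruct (Rle_dec _ _); lra. }
      assert (F p <= F (Rmax lo (Rmin p x))).
      { apply F_mono. split; [lra |]. rewrite Rmin_left by lra. apply Rmax_r. }
      lra.
    + rewrite (Rmin_right q x), (Rmin_right p x) by lra. pose proof (F_mono p q Hpq). lra.
Qed.

(** By real
    induction, the increment up to x is dominated by the clipped masses. *)
Lemma open_cover_mass lo hi (al be : nat -> R) :
  0 <= lo <= hi -> (forall n, 0 <= al n <= be n) ->
  (forall x, lo <= x <= hi -> exists n, al n < x < be n) ->
  exists N, F hi - F lo <= fsum (fun n => F (be n) - F (al n)) N.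
Proof.
  intros Hlh Hab Hcov.
  set (c := fun n x => F (clip lo (be n) x) - F (clip lo (al n) x)).
  assert (Hc_mono : forall n y x, lo <= y <= x -> c n y <= c n x).
  { intros n y x Hyx. apply clip_mass_mono; [lra | apply Hab | exact Hyx]. }
  assert (Hc_nonneg : forall n x, lo <= x -> 0 <= c n x).
  { intros n x Hx. pose proof (Hc_mono n lo x ltac:(lra)) as Hm. unfold c in *.
    rewrite !clip_self in Hm. lra. }
  set (P := fun x => exists N, F x - F lo <= fsum (fun n => c n x) N).
  (* inside the interval (al k, be k) the clipped k-th mass grows exactly like F *)
  assert (Hstep : forall y x k, lo <= y <= x -> al k < y -> x < be k -> P y -> P x).
  { intros y x k Hyx Hay Hxb [N HN]. exists (max N (S k)).
    assert (Hk : c k x - c k y = F x - F y).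
    { unfold c, clip. specialize (Hab k).
      rewrite (Rmin_right (be k) x), (Rmin_right (be k) y), (Rmin_left (al k) x), (Rmin_left (al k) y)
        by lra.
      rewrite (Rmax_right lo x), (Rmax_right lo y) by lra. ring. }
    assert (c k x - c k y <= fsum (fun n => c n x) (max N (S k)) - fsum (fun n => c n y) (max N (S k))).
    { rewrite fsum_minus. apply (fsum_term (fun n => c n x - c n y)); [| lia].
      intros n. pose proof (Hc_mono n y x Hyx). lra. }
    pose proof (fsum_le_extend (fun n => c n y) N (max N (S k)) ltac:(intros; apply Hc_nonneg; lra)
                  ltac:(lia)).
    lra. }
  assert (HP : forall x, lo <= x <= hi -> P x).
  { apply real_ind; [lra | exists O; simpl; lra | |].
    - intros x Hx Hall. destruct (Hcov x ltac:(lra)) as [k Hk].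
      exists (be k - x). split; [lra |]. intros y Hy. apply (Hstep x y k); [lra | lra | lra | apply Hall; lra].
    - intros x Hx Hall. destruct (Hcov x ltac:(lra)) as [k Hk].
      set (y := Rmax lo ((al k + x) / 2)).
      assert (lo <= y) by apply Rmax_l. assert ((al k + x) / 2 <= y) by apply Rmax_r.
      assert (y < x) by (unfold y, Rmax; destruct (Rle_dec lo ((al k + x) / 2)); lra).
      apply (Hstep y x k); [lra | lra | lra | apply Hall; lra]. }
  destruct (HP hi ltac:(lra)) as [N HN]. exists N.
  eapply Rle_trans; [exact HN |]. apply fsum_le. intros n. apply clip_mass_le; [lra | apply Hab | lra].
Qed.

(** If the LS measure of F does not charge A and (u,v] lies in A, then F is
    constant on [u,v].  Enlarge the covering intervals slightly (F is right
    continuous) to open ones and apply the finite subcover bound on [u',v]. *)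
Lemma LS_null_interval (A : R -> Prop) u v : LS_null F A -> 0 <= u < v ->
  (forall s, u < s <= v -> A s) -> F v <= F u.
Proof.
  intros [_ Hnull] Huv HA. apply Rnot_lt_le. intros Hlt.
  set (eps := (F v - F u) / 4). assert (He : 0 < eps) by (unfold eps; lra).
  destruct (Hnull eps He) as [al [bl [Hab [Hcov Hsum]]]].
  assert (Hwiden : forall n, exists b, bl n < b /\ F b - F (bl n) <= eps / 2 ^ (S n)).
  { intros n. destruct (proj1 F_I (bl n) ltac:(specialize (Hab n); lra)) as [Hr _].
    destruct (Hr (eps / 2 ^ (S n))) as [d [Hd Hd']]; [apply Rdiv_lt_0_compat; [lra | apply pow2_pos] |].
    exists (bl n + d / 2). split; [lra |]. specialize (Hd' (bl n + d / 2) ltac:(lra)).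
    apply Rabs_def2 in Hd'. lra. }
  destruct (choice _ Hwiden) as [b Hb].
  destruct (proj1 F_I u ltac:(lra)) as [Hru _]. destruct (Hru eps He) as [du [Hdu Hdu']].
  set (u' := u + Rmin du (v - u) / 2).
  assert (0 < Rmin du (v - u)) by (apply Rmin_glb_lt; lra).
  pose proof (Rmin_l du (v - u)). pose proof (Rmin_r du (v - u)).
  assert (Hu' : u < u' < v) by (unfold u'; lra).
  assert (HFu' : F u' - F u < eps) by (specialize (Hdu' u' ltac:(unfold u'; lra)); apply Rabs_def2 in Hdu'; lra).
  destruct (open_cover_mass u' v al b) as [N HN]; [lra | intros n; specialize (Hab n); specialize (Hb n); lra | |].
  { intros x Hx. destruct (Hcov x ltac:(lra) (HA x ltac:(lra))) as [k Hk]. specialize (Hb k).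
    exists k. lra. }
  assert (fsum (fun n => F (b n) - F (al n)) N <= cover_sum F al bl N + eps).
  { rewrite cover_sum_fsum. pose proof (fsum_halves eps N ltac:(lra)).
    assert (fsum (fun n => F (b n) - F (al n)) N - fsum (fun n => F (bl n) - F (al n)) N
              <= fsum (fun n => eps / 2 ^ S n) N); [| lra].
    rewrite (fsum_minus (fun n => F (bl n) - F (al n))). apply fsum_le.
    intros n. destruct (Hb n) as [_ Hbn]. lra. }
  specialize (Hsum N). unfold eps in *. lra.
Qed.

Lemma LS_null_no_atom (A : R -> Prop) s : LS_null F A -> 0 < s -> A s ->
  forall eps, 0 < eps -> exists y, 0 <= y < s /\ F s - F y <= eps.
Proof.
  intros [_ Hnull] Hs HA eps He. destruct (Hnull eps He) as [al [bl [Hab [Hcov Hsum]]]].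
  destruct (Hcov s Hs HA) as [n Hn]. exists (al n). pose proof (Hab n). split; [lra |].
  pose proof (Hsum (S n)) as Hmass. simpl in Hmass.
  assert (Hpos : forall N, 0 <= cover_sum F al bl N).
  { induction N; simpl; [lra |]. pose proof (F_mono (al N) (bl N) (Hab N)). lra. }
  specialize (Hpos n).
  pose proof (F_mono s (bl n) ltac:(lra)). lra.
Qed.

End IntervalMass.

(** * Uniqueness *)

Lemma no_positive_excursion (D : R -> R) : D 0 <= 0 ->
  (forall p q, 0 <= p < q -> (forall z, p < z <= q -> 0 < D z) -> D q <= D p) ->
  (forall s, 0 < s -> 0 < D s -> forall eps, 0 < eps ->
     exists y, 0 <= y < s /\ forall z, y <= z < s -> D s <= D z + eps) ->
  forall t, 0 <= t -> D t <= 0.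
Proof.
  intros H0 Hdecr Hjump t Ht. apply Rnot_lt_le. intros HDt.
  (* s = the last time in [0,t] where D <= 0 *)
  set (Z := fun z => 0 <= z <= t /\ D z <= 0).
  assert (HZ : is_lub Z (Rsup Z)).
  { apply Rsup_lub; [exists 0; split; [lra | exact H0] |]. exists t. intros z [Hz _]. lra. }
  set (s := Rsup Z) in *.
  assert (Hs0 : 0 <= s) by (apply (proj1 HZ); split; [lra | exact H0]).
  assert (Hst : s <= t) by (apply (proj2 HZ); intros z [Hz _]; lra).
  assert (Hafter : forall z, s < z <= t -> 0 < D z).
  { intros z Hz. apply Rnot_le_lt. intros HDz.
    assert (z <= s) by (apply (proj1 HZ); split; [lra | exact HDz]). lra. }
  assert (Hts : D t <= D s).
  { destruct (Req_dec s t) as [-> | E]; [lra |]. apply Hdecr; [lra | exact Hafter]. }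
  destruct (Rle_dec (D s) 0) as [HDs | HDs]; [lra |].
  assert (Hspos : 0 < s) by (destruct (Req_dec s 0) as [E | E]; [rewrite E in HDs; lra | lra]).
  destruct (Hjump s Hspos ltac:(lra) (D t / 2) ltac:(lra)) as [y [Hy Hys]].
  (* some z in (y,s) has D z <= 0, forcing D s <= D t / 2 *)
  destruct (classic (exists z, Z z /\ y < z)) as [[z [[Hz HDz] Hyz]] | Hnone].
  - assert (Hzs : z <= s) by (apply (proj1 HZ); split; assumption).
    destruct (Req_dec z s) as [-> | E]; [lra |].
    specialize (Hys z ltac:(lra)). lra.
  - assert (s <= y); [| lra]. apply (proj2 HZ). intros z Hz.
    apply Rnot_lt_le. intros Hlt. apply Hnone. now exists z.
Qed.

(** Only the facts used are
    assumed: eta_l1 and eta_u2 do not charge {phi1 > 0}, resp. {phi2 < a},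
    while eta_u1 and eta_l2 are merely nondecreasing with nonnegative start. *)
Section Comparison.
Variables (a : R) (psi phi1 phi2 l1 u1 l2 u2 : R -> R).
Hypothesis range1 : forall t, 0 <= t -> 0 <= phi1 t <= a.
Hypothesis range2 : forall t, 0 <= t -> 0 <= phi2 t <= a.
Hypothesis decomp1 : forall t, 0 <= t -> phi1 t = psi t + (l1 t - u1 t).
Hypothesis decomp2 : forall t, 0 <= t -> phi2 t = psi t + (l2 t - u2 t).
Hypothesis l1_I : is_I l1.
Hypothesis u2_I : is_I u2.
Hypothesis u1_mono : forall s t, 0 <= s <= t -> u1 s <= u1 t.
Hypothesis l2_mono : forall s t, 0 <= s <= t -> l2 s <= l2 t.
Hypothesis u1_0 : 0 <= u1 0.
Hypothesis l2_0 : 0 <= l2 0.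
Hypothesis l1_null : LS_null l1 (fun s => 0 <= s /\ phi1 s > 0).
Hypothesis u2_null : LS_null u2 (fun s => 0 <= s /\ phi2 s < a).

Let D (t : R) : R := phi1 t - phi2 t.

Lemma D_eq z : 0 <= z -> D z = (l1 z - u1 z) - (l2 z - u2 z).
Proof. intros Hz. unfold D. rewrite (decomp1 z Hz), (decomp2 z Hz). ring. Qed.

(** Where D > 0, phi1 > 0 and phi2 < a, so l1 and u2 cannot grow. *)
Lemma D_pos_l1 z : 0 <= z -> 0 < D z -> 0 <= z /\ phi1 z > 0.
Proof. intros Hz HD. unfold D in HD. pose proof (range2 z Hz). split; lra. Qed.

Lemma D_pos_u2 z : 0 <= z -> 0 < D z -> 0 <= z /\ phi2 z < a.
Proof. intros Hz HD. unfold D in HD. pose proof (range1 z Hz). split; lra. Qed.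

(** At time 0 the atoms of l1 and u2 vanish where D > 0, so D 0 <= 0. *)
Lemma D_start : D 0 <= 0.
Proof.
  apply Rnot_lt_le. intros HD0.
  pose proof (proj1 l1_null (D_pos_l1 0 ltac:(lra) HD0)).
  pose proof (proj1 u2_null (D_pos_u2 0 ltac:(lra) HD0)).
  rewrite D_eq in HD0 by lra. lra.
Qed.

(** On a stretch where D > 0, l1 and u2 are flat, so D cannot increase. *)
Lemma D_decr p q : 0 <= p < q -> (forall z, p < z <= q -> 0 < D z) -> D q <= D p.
Proof.
  intros Hpq Hpos.
  pose proof (LS_null_interval l1 l1_I _ p q l1_null Hpq
                (fun z Hz => D_pos_l1 z ltac:(lra) (Hpos z Hz))).
  pose proof (LS_null_interval u2 u2_I _ p q u2_null Hpq
                (fun z Hz => D_pos_u2 z ltac:(lra) (Hpos z Hz))).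
  pose proof (u1_mono p q ltac:(lra)). pose proof (l2_mono p q ltac:(lra)).
  rewrite !D_eq by lra. lra.
Qed.

(** D has no upward jump at a positive point: l1 and u2 carry no atom there. *)
Lemma D_no_jump_up s : 0 < s -> 0 < D s -> forall eps, 0 < eps ->
  exists y, 0 <= y < s /\ forall z, y <= z < s -> D s <= D z + eps.
Proof.
  intros Hs HDs eps He.
  destruct (LS_null_no_atom l1 l1_I _ s l1_null Hs (D_pos_l1 s ltac:(lra) HDs) (eps / 2))
    as [y1 [Hy1 Hy1']]; [lra |].
  destruct (LS_null_no_atom u2 u2_I _ s u2_null Hs (D_pos_u2 s ltac:(lra) HDs) (eps / 2))
    as [y2 [Hy2 Hy2']]; [lra |].
  exists (Rmax y1 y2). pose proof (Rmax_l y1 y2). pose proof (Rmax_r y1 y2).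
  split; [split; [lra | apply Rmax_lub_lt; lra] |]. intros z Hz.
  pose proof (proj2 l1_I y1 z ltac:(lra)). pose proof (proj2 u2_I y2 z ltac:(lra)).
  pose proof (u1_mono z s ltac:(lra)). pose proof (l2_mono z s ltac:(lra)).
  rewrite !D_eq by lra. lra.
Qed.

Lemma comparison t : 0 <= t -> phi1 t <= phi2 t.
Proof.
  intros Ht. pose proof (no_positive_excursion D D_start D_decr D_no_jump_up t Ht).
  unfold D in *. lra.
Qed.

End Comparison.

Lemma solution_le (a : R) (psi phi1 eta1 phi2 eta2 : R -> R) :
  Skorokhod_sol a psi phi1 eta1 -> Skorokhod_sol a psi phi2 eta2 ->
  forall t, 0 <= t -> phi1 t <= phi2 t.
Proof.
  intros [_ [_ [Hr1 [l1 [u1 [Hl1 [Hu1 [Hl10 [Hu10 [Hd1 [Nl1 Nu1]]]]]]]]]]]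
         [_ [_ [Hr2 [l2 [u2 [Hl2 [Hu2 [Hl20 [Hu20 [Hd2 [Nl2 Nu2]]]]]]]]]]].
  apply (comparison a psi phi1 phi2 l1 u1 l2 u2).
  - intros t Ht. apply (Hr1 t Ht).
  - intros t Ht. apply (Hr2 t Ht).
  - intros t Ht. rewrite <- Hd1 by exact Ht. apply (Hr1 t Ht).
  - intros t Ht. rewrite <- Hd2 by exact Ht. apply (Hr2 t Ht).
  - exact Hl1.
  - exact Hu2.
  - exact (proj2 Hu1).
  - exact (proj2 Hl2).
  - exact Hu10.
  - exact Hl20.
  - exact Nl1.
  - exact Nu2.
Qed.

Theorem theorem1p4 (a : R) (psi : R -> R) :
  0 < a -> is_D psi ->
  let phi := Lambda a (Gamma0 psi) in
  Skorokhod_sol a psi phi (fun t => phi t - psi t) /\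
  (forall phi' eta' : R -> R, Skorokhod_sol a psi phi' eta' ->
     forall t, 0 <= t -> phi' t = phi t).
Proof.
  intros Ha Hpsi phi.
  pose proof (existence a Ha psi Hpsi) as Hsol.
  split; [exact Hsol |].
  intros phi' eta' Hsol' t Ht. apply Rle_antisym.
  - exact (solution_le a psi phi' eta' _ _ Hsol' Hsol t Ht).
  - exact (solution_le a psi _ _ phi' eta' Hsol Hsol' t Ht).
Qed.
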